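(* Under the standing assumptions (A) below, let $\Omega'=\{t\in[0,L]:\tau(t)\ne\pm\lambda\}\cup\Omega$. If $I$ is any connected component of $\Omega'$, then $\tau(I)$ is contained in a great circle of $S^{n-1}$ through $\lambda$.
   Context: Standing assumptions (A): $n\ge2$, $L>0$, $\beta\colon[0,L]\to(0,\infty)$ of bounded variation with $1/\beta$ bounded; $\tau\in W^{1,\infty}((0,L);S^{n-1})$ with $k=\operatorname{ess\,sup}|\tau'|>0$; $\lambda\in S^{n-1}$ and $u\in W^{1,\infty}((0,L);\mathbb{R}^n)\setminus\{0\}$ such that $u'+(u\cdot\tau')\tau=\beta(\lambda-(\lambda\cdot\tau)\tau)$ and $|u|\tau'=ku$ a.e. in $(0,L)$; $f=k|u|$, which then satisfies $f'=\beta\,\lambda\cdot\tau'$ and $f(\tau''+k^2\tau)=\beta k^2\,\mathrm{proj}^\perp_{\tau,\tau'}(\lambda)$ weakly in $(0,L)$ (where $\mathrm{proj}^\perp_{V,W}$ is the orthogonal projection onto the orthogonal complement of $\mathrm{span}\{V,W\}$); $\Omega=\{t\in[0,L]:f(t)>0\}$ (open relative to $[0,L]$); and $\tau(t),\tau'(t),\lambda$ are linearly dependent for every $t\in\Omega$ (note $\tau'$ is continuous on $\Omega$). *)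

From Stdlib Require Import Reals Lra Lia.
Open Scope R_scope.

(* Vectors of R^n are functions nat -> R; only indices i < n matter. *)
Definition vec := nat -> R.

Fixpoint rsum (N : nat) (f : nat -> R) : R :=
  match N with O => 0 | S m => rsum m f + f m end.

Definition dot (n : nat) (x y : vec) : R := rsum n (fun i => x i * y i).
Definition vnorm (n : nat) (x : vec) : R := sqrt (dot n x x).

Definition veq (n : nat) (x y : vec) : Prop := forall i, (i < n)%nat -> x i = y i.
Definition vzero (n : nat) (x : vec) : Prop := forall i, (i < n)%nat -> x i = 0.
Definition vopp (x : vec) : vec := fun i => - x i.

Definition negligible (A : R -> Prop) : Prop :=
  forall eps, 0 < eps ->
    exists a b : nat -> R,
      (forall k, a k <= b k) /\
      (forall x, A x -> exists k, a k < x < b k) /\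
      (forall N, rsum N (fun k => b k - a k) <= eps).

Definition ae_on (a b : R) (P : R -> Prop) : Prop :=
  negligible (fun t => a < t < b /\ ~ P t).

Definition lipschitz_on (n : nat) (a b : R) (g : R -> vec) : Prop :=
  exists K, forall i s t, (i < n)%nat -> a <= s <= b -> a <= t <= b ->
    Rabs (g s i - g t i) <= K * Rabs (s - t).

(* g is in W^{1,oo}((a,b);R^n) with (representative of its) derivative g':
   g is Lipschitz on [a,b] and classically differentiable with derivative g'
   at almost every point of (a,b). *)
Definition W1inf (n : nat) (a b : R) (g g' : R -> vec) : Prop :=
  lipschitz_on n a b g /\
  ae_on a b (fun t => forall i, (i < n)%nat ->
                        derivable_pt_lim (fun s => g s i) t (g' t i)).

Definition is_ess_sup (a b : R) (h : R -> R) (M : R) : Prop :=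
  ae_on a b (fun t => h t <= M) /\
  (forall M', M' < M -> ~ ae_on a b (fun t => h t <= M')).

Definition bounded_variation (a b : R) (h : R -> R) : Prop :=
  exists V, forall (N : nat) (p : nat -> R),
    p O = a -> p N = b -> (forall k, (k < N)%nat -> p k <= p (S k)) ->
    rsum N (fun k => Rabs (h (p (S k)) - h (p k))) <= V.

Definition lin_dep3 (n : nat) (x y z : vec) : Prop :=
  exists a b c : R, ~ (a = 0 /\ b = 0 /\ c = 0) /\
    vzero n (fun i => a * x i + b * y i + c * z i).

Definition vcont_within (n : nat) (a b : R) (g : R -> vec) (t : R) : Prop :=
  forall i, (i < n)%nat -> forall eps, 0 < eps -> exists delta, 0 < delta /\
    forall s, a <= s <= b -> Rabs (s - t) < delta -> Rabs (g s i - g t i) < eps.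

Definition is_interval (I : R -> Prop) : Prop :=
  forall x y z, I x -> I y -> x <= z <= y -> I z.

Definition conn_component (S I : R -> Prop) : Prop :=
  (exists x, I x) /\ (forall x, I x -> S x) /\ is_interval I /\
  (forall J, is_interval J -> (forall x, J x -> S x) ->
     (exists x, J x /\ I x) -> forall x, J x -> I x).

(* the image of I under g lies in a great circle of S^{n-1} through lam:
   there is a unit mu orthogonal to lam with g(t) in span{lam, mu}
   (g(t) being a unit vector, it lies on that great circle). *)
Definition in_great_circle_through (n : nat) (lam : vec) (g : R -> vec)
  (I : R -> Prop) : Prop :=
  exists mu : vec, dot n mu mu = 1 /\ dot n lam mu = 0 /\
    forall t, I t -> veq n (g t)
      (fun i => dot n (g t) lam * lam i + dot n (g t) mu * mu i).

From Stdlib Require Import Reals Lra Lia Psatz Classical.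
Open Scope R_scope.

(* Write g = lam . tau.  Where f > 0 and g^2 < 1, tau' is orthogonal to tau and lies in
   span{tau, lam}, hence is a multiple of lam - g tau; so for every z orthogonal to lam the ratio
   Q_z = (z . tau)^2 / (1 - g^2) is locally constant, and so is the zero set of z . tau.  As tau
   and u are merely Lipschitz, "locally constant" comes from a mean value inequality for Lipschitz
   functions differentiable off a null set, proved with Cousin's lemma.
   A zero s of u with g(s)^2 < 1 is isolated, because the ODE makes (lam - g(s) tau(s)) . u
   strictly monotone near s, and Q_z is continuous across it.  At a pole tau(s) = +-lam, which
   inside Omega' forces f(s) > 0, tau' is continuous, orthogonal to lam and of length k, so
   1 - g^2 grows like k^2 (t - s)^2: if z . tau vanishes on one side of s then z . tau'(s) = 0,
   hence Q_z -> 0 on the other side as well.  Along a component I, z . tau therefore vanishes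
   everywhere as soon as it vanishes near one non-polar point t0 of I; taking z orthogonal to
   lam and tau(t0) puts tau(I) in the plane spanned by lam and tau(t0). *)

(** * Finite sums and the inner product *)

Lemma rsum_ext N f g : (forall i, (i < N)%nat -> f i = g i) -> rsum N f = rsum N g.
Proof.
  induction N; simpl; intros H; auto.
  rewrite IHN, (H N) by (auto; lia). auto.
Qed.

Lemma rsum_plus N f g : rsum N (fun i => f i + g i) = rsum N f + rsum N g.
Proof. induction N; simpl; lra. Qed.

Lemma rsum_scal N c f : rsum N (fun i => c * f i) = c * rsum N f.
Proof. induction N; simpl; [|rewrite IHN]; ring. Qed.

Lemma rsum_le N f g : (forall i, (i < N)%nat -> f i <= g i) -> rsum N f <= rsum N g.
Proof.
  induction N; simpl; intros H; [lra|].
  pose proof (H N ltac:(lia)). pose proof (IHN ltac:(intros; apply H; lia)). lra.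
Qed.

Lemma rsum_nonneg N f : (forall i, (i < N)%nat -> 0 <= f i) -> 0 <= rsum N f.
Proof.
  induction N; simpl; intros H; [lra|].
  pose proof (H N ltac:(lia)). pose proof (IHN ltac:(intros; apply H; lia)). lra.
Qed.

Lemma rsum_abs N f : Rabs (rsum N f) <= rsum N (fun i => Rabs (f i)).
Proof.
  induction N; simpl; [rewrite Rabs_R0; lra|].
  pose proof (Rabs_triang (rsum N f) (f N)). lra.
Qed.

Lemma rsum_mono N M f : (N <= M)%nat -> (forall i, (i < M)%nat -> 0 <= f i) ->
  rsum N f <= rsum M f.
Proof.
  induction M; intros HNM H; [replace N with 0%nat by lia; lra|].
  destruct (Nat.eq_dec N (S M)); [subst; lra|].
  simpl. pose proof (IHM ltac:(lia) ltac:(intros; apply H; lia)). pose proof (H M ltac:(lia)). lra.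
Qed.

Lemma rsum_term N f j : (j < N)%nat -> (forall i, (i < N)%nat -> 0 <= f i) ->
  f j <= rsum N f.
Proof.
  intros Hj H. apply Rle_trans with (rsum (S j) f); [|apply rsum_mono; [lia | auto]].
  simpl. pose proof (rsum_nonneg j f ltac:(intros; apply H; lia)). lra.
Qed.

Lemma rsum_two N f i j : (i < j < N)%nat -> (forall l, (l < N)%nat -> 0 <= f l) ->
  f i + f j <= rsum N f.
Proof.
  intros Hij H. apply Rle_trans with (rsum (S j) f); [|apply rsum_mono; [lia | auto]].
  simpl. pose proof (rsum_term j f i ltac:(lia) ltac:(intros; apply H; lia)). lra.
Qed.

Lemma dot_ext n x y x' y' : (forall i, (i < n)%nat -> x i = x' i) ->
  (forall i, (i < n)%nat -> y i = y' i) -> dot n x y = dot n x' y'.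
Proof. intros Hx Hy; apply rsum_ext; intros; rewrite Hx, Hy; auto. Qed.

Lemma dot_sym n x y : dot n x y = dot n y x.
Proof. apply rsum_ext; intros; ring. Qed.

Lemma dot_lin_r n a b x y z :
  dot n z (fun i => a * x i + b * y i) = a * dot n z x + b * dot n z y.
Proof. unfold dot; induction n; simpl; [|rewrite IHn]; ring. Qed.

Lemma dot_lin3_r n a b c x y w z :
  dot n z (fun i => a * x i + b * y i + c * w i) = a * dot n z x + b * dot n z y + c * dot n z w.
Proof. unfold dot; induction n; simpl; [|rewrite IHn]; ring. Qed.

Lemma dot_scal_r n c x y : dot n x (fun i => c * y i) = c * dot n x y.
Proof. unfold dot; rewrite <- rsum_scal; apply rsum_ext; intros; ring. Qed.

Lemma dot_scal_l n c x y : dot n (fun i => c * x i) y = c * dot n x y.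
Proof. rewrite dot_sym, dot_scal_r, dot_sym; auto. Qed.

Lemma dot_square2 n a b x y :
  dot n (fun i => a * x i + b * y i) (fun i => a * x i + b * y i) =
  a * a * dot n x x + 2 * a * b * dot n x y + b * b * dot n y y.
Proof. unfold dot; induction n; simpl; [|rewrite IHn]; ring. Qed.

Lemma dot_nonneg n x : 0 <= dot n x x.
Proof. apply rsum_nonneg; intros; nra. Qed.

Lemma dot_comp_sq n x i : (i < n)%nat -> x i * x i <= dot n x x.
Proof. intros; apply (rsum_term n (fun i => x i * x i)); auto; intros; nra. Qed.

Lemma dot_eq0_vzero n x : dot n x x = 0 -> vzero n x.
Proof. intros H i Hi. pose proof (dot_comp_sq n x i Hi). nra. Qed.

Lemma dot_vzero_r n x y : vzero n y -> dot n x y = 0.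
Proof.
  intros H. rewrite (dot_ext n x y x (fun _ => 0)); auto. clear H.
  unfold dot; induction n; simpl; [|rewrite IHn]; ring.
Qed.

Lemma dot_cauchy_schwarz n x y : dot n x y * dot n x y <= dot n x x * dot n y y.
Proof.
  destruct (dot_nonneg n x) as [Hx | Hx].
  - pose proof (dot_nonneg n (fun i => dot n x x * y i + (- dot n x y) * x i)) as H.
    rewrite dot_square2, (dot_sym n y x) in H. nra.
  - rewrite (dot_sym n x y), (dot_vzero_r n y x (dot_eq0_vzero n x (eq_sym Hx))). nra.
Qed.

Lemma vnorm_sq n x : vnorm n x * vnorm n x = dot n x x.
Proof. apply sqrt_sqrt, dot_nonneg. Qed.

Lemma vnorm_pos n x : ~ vzero n x -> 0 < vnorm n x.
Proof.
  intros H. destruct (sqrt_pos (dot n x x)) as [|H0]; auto.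
  exfalso; apply H, dot_eq0_vzero. fold (vnorm n x) in H0. rewrite <- vnorm_sq, <- H0; ring.
Qed.

Definition l1norm n (x : vec) := rsum n (fun i => Rabs (x i)).

Lemma l1norm_nonneg n x : 0 <= l1norm n x.
Proof. apply rsum_nonneg; intros; apply Rabs_pos. Qed.

Lemma dot_le_l1norm n x y e : (forall i, (i < n)%nat -> Rabs (y i) <= e) ->
  Rabs (dot n x y) <= e * l1norm n x.
Proof.
  intros H. eapply Rle_trans; [apply rsum_abs|]. unfold l1norm.
  rewrite <- rsum_scal. apply rsum_le. intros i Hi. rewrite Rabs_mult.
  pose proof (H i Hi). pose proof (Rabs_pos (x i)). nra.
Qed.

Lemma dot_unit_le_l1norm n p x : dot n x x = 1 -> Rabs (dot n p x) <= l1norm n p.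
Proof.
  intros Hx. rewrite <- (Rmult_1_l (l1norm n p)). apply dot_le_l1norm.
  intros i Hi. pose proof (dot_comp_sq n x i Hi). apply Rabs_le. nra.
Qed.

Lemma unit_gap n x y : dot n x x = 1 -> dot n y y = 1 ->
  dot n (fun i => 1 * x i + (- dot n y x) * y i) (fun i => 1 * x i + (- dot n y x) * y i)
  = 1 - dot n y x * dot n y x.
Proof. intros Hx Hy. rewrite dot_square2, Hx, Hy, (dot_sym n x y). ring. Qed.

Lemma unit_dot_sq_le1 n x y : dot n x x = 1 -> dot n y y = 1 -> dot n y x * dot n y x <= 1.
Proof.
  intros Hx Hy. pose proof (unit_gap n x y Hx Hy).
  pose proof (dot_nonneg n (fun i => 1 * x i + (- dot n y x) * y i)). lra.
Qed.

Lemma unit_dot_sq_eq1 n x y : dot n x x = 1 -> dot n y y = 1 -> dot n y x * dot n y x = 1 ->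
  veq n x (fun i => dot n y x * y i).
Proof.
  intros Hx Hy Hg i Hi. pose proof (unit_gap n x y Hx Hy) as H. rewrite Hg, Rminus_diag in H.
  specialize (dot_eq0_vzero n _ H i Hi). simpl. lra.
Qed.

Lemma normalize n v lam : 0 < dot n v v -> dot n lam v = 0 ->
  exists mu, dot n mu mu = 1 /\ dot n lam mu = 0 /\ veq n v (fun i => sqrt (dot n v v) * mu i).
Proof.
  intros Hv Hl. assert (Hs : 0 < sqrt (dot n v v)) by (apply sqrt_lt_R0; auto).
  pose proof (vnorm_sq n v) as Hss; unfold vnorm in Hss.
  exists (fun i => / sqrt (dot n v v) * v i).
  rewrite dot_scal_l, !dot_scal_r, Hl. set (r := sqrt (dot n v v)) in *. repeat split.
  - rewrite <- Hss. field. lra.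
  - ring.
  - intros i _. field. lra.
Qed.

Definition basis (j : nat) : vec := fun i => if Nat.eq_dec i j then 1 else 0.

Lemma dot_basis n j x : (j < n)%nat -> dot n (basis j) x = x j.
Proof.
  unfold dot, basis. induction n; intros Hj; [lia|]. simpl.
  destruct (Nat.eq_dec n j) as [->|].
  - rewrite (rsum_ext j _ (fun _ => 0)).
    + replace (rsum j (fun _ => 0)) with 0 by (clear; induction j; simpl; lra). ring.
    + intros i Hi. destruct (Nat.eq_dec i j); [lia|ring].
  - rewrite IHn by lia. ring.
Qed.

Lemma exists_unit_orthogonal n lam : (2 <= n)%nat -> dot n lam lam = 1 ->
  exists mu, dot n mu mu = 1 /\ dot n lam mu = 0.
Proof.
  intros Hn Hl.
  assert (Hj : exists j, (j < n)%nat /\ lam j * lam j < 1).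
  { pose proof (rsum_two n (fun i => lam i * lam i) 0 1 ltac:(lia) ltac:(intros; nra)) as H01.
    fold (dot n lam lam) in H01.
    destruct (Rlt_or_le (lam 0%nat * lam 0%nat) 1); [exists 0%nat | exists 1%nat];
      split; try lia; nra. }
  destruct Hj as [j [Hjn Hj]].
  set (v := fun i => 1 * basis j i + (- lam j) * lam i).
  assert (Hvv : dot n v v = 1 - lam j * lam j).
  { unfold v. rewrite dot_square2, Hl, !dot_basis by auto. unfold basis.
    destruct (Nat.eq_dec j j); [ring|lia]. }
  assert (Hlv : dot n lam v = 0).
  { unfold v. rewrite dot_lin_r, Hl, dot_sym, dot_basis by auto. ring. }
  destruct (normalize n v lam ltac:(lra) Hlv) as [mu [? [? _]]]. eauto.
Qed.

Lemma veq_span2_of_orthogonal n lam mu x : dot n lam lam = 1 -> dot n mu mu = 1 ->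
  dot n lam mu = 0 -> (forall z, dot n z lam = 0 -> dot n z mu = 0 -> dot n z x = 0) ->
  veq n x (fun i => dot n x lam * lam i + dot n x mu * mu i).
Proof.
  intros Hl Hm Hlm H.
  set (r := fun i => 1 * x i + (- dot n x lam) * lam i + (- dot n x mu) * mu i).
  assert (Hrl : dot n r lam = 0).
  { unfold r. rewrite dot_sym, dot_lin3_r, Hl, Hlm, dot_sym. ring. }
  assert (Hrm : dot n r mu = 0).
  { unfold r. rewrite dot_sym, dot_lin3_r, Hm, (dot_sym n mu lam), Hlm, (dot_sym n mu x). ring. }
  assert (Hrr : dot n r r = 0).
  { unfold r at 2. rewrite dot_lin3_r, Hrl, Hrm, (H r Hrl Hrm). ring. }
  intros i Hi. specialize (dot_eq0_vzero n r Hrr i Hi). unfold r. lra.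
Qed.

Lemma parallel_dot n (u w : vec) k : veq n (fun i => vnorm n u * w i) (fun i => k * u i) ->
  dot n u w = k * vnorm n u.
Proof.
  intros H. destruct (classic (vzero n u)) as [Hu | Hu].
  - rewrite dot_sym, (dot_vzero_r n w u Hu).
    replace (vnorm n u) with 0; [ring|].
    unfold vnorm. rewrite (dot_vzero_r n u u Hu). now rewrite sqrt_0.
  - pose proof (vnorm_pos n u Hu).
    apply Rmult_eq_reg_l with (vnorm n u); [|lra].
    rewrite <- dot_scal_r, (dot_ext n u _ u (fun i => k * u i)), dot_scal_r, <- vnorm_sq by auto.
    ring.
Qed.

Lemma parallel_norm n (u w : vec) k : veq n (fun i => vnorm n u * w i) (fun i => k * u i) ->
  0 < vnorm n u -> dot n w w = k * k.
Proof.
  intros H Hu.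
  assert (E : vnorm n u * vnorm n u * dot n w w = k * k * (vnorm n u * vnorm n u)).
  { replace (vnorm n u * vnorm n u * dot n w w)
      with (dot n (fun i => vnorm n u * w i) (fun i => vnorm n u * w i))
      by (rewrite dot_scal_l, dot_scal_r; ring).
    rewrite (dot_ext n _ _ (fun i => k * u i) (fun i => k * u i)), dot_scal_l, dot_scal_r, vnorm_sq
      by auto.
    ring. }
  apply Rmult_eq_reg_l with (vnorm n u * vnorm n u); nra.
Qed.

Lemma ode_dot n (u u' tau tau' : vec) b lam p :
  veq n (fun i => u' i + dot n u tau' * tau i) (fun i => b * (lam i - dot n lam tau * tau i)) ->
  dot n p u' = - dot n u tau' * dot n p tau + b * (dot n p lam - dot n lam tau * dot n p tau).
Proof.
  intros H.
  rewrite (dot_ext n p u' p (fun i => (- dot n u tau' - b * dot n lam tau) * tau i + b * lam i)),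
    dot_lin_r by (auto; intros i Hi; specialize (H i Hi); simpl in H; lra).
  ring.
Qed.

Lemma lin_dep3_tangent n (x w lam : vec) : dot n x x = 1 -> dot n x w = 0 ->
  dot n lam lam = 1 -> dot n lam x * dot n lam x < 1 -> lin_dep3 n x w lam ->
  exists c, forall y, dot n y w = c * (dot n y lam - dot n lam x * dot n y x).
Proof.
  intros Hx Hxw Hl Hg [al [be [ga [Hnz Hv]]]]. set (g := dot n lam x) in *.
  assert (Hcomb : forall y, al * dot n y x + be * dot n y w + ga * dot n y lam = 0).
  { intros y. rewrite <- dot_lin3_r. now apply dot_vzero_r. }
  assert (H1 := Hcomb x). assert (H2 := Hcomb lam).
  rewrite Hx, Hxw, (dot_sym n x lam) in H1. rewrite Hl in H2. fold g in H1, H2.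
  assert (Hbe : be <> 0).
  { intros ->. apply Hnz.
    assert (E1 : al + ga * g = 0) by lra. assert (E2 : al * g + ga = 0) by lra.
    assert (Hga : ga * (1 - g * g) = 0).
    { replace (ga * (1 - g * g)) with ((al * g + ga) - g * (al + ga * g)) by ring.
      rewrite E1, E2. ring. }
    assert (ga = 0) by (apply Rmult_integral in Hga; destruct Hga; [auto | lra]). subst ga.
    repeat split; lra. }
  exists (- ga / be). intros y. specialize (Hcomb y).
  apply Rmult_eq_reg_l with be; auto. field_simplify; auto. nra.
Qed.

(** * Null sets *)

Lemma negligible_subset (A B : R -> Prop) : negligible A -> (forall x, B x -> A x) -> negligible B.
Proof.
  intros H HBA e He. destruct (H e He) as [a [b [H1 [H2 H3]]]].
  exists a, b; repeat split; auto.
Qed.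

Lemma negligible_union (A B : R -> Prop) :
  negligible A -> negligible B -> negligible (fun x => A x \/ B x).
Proof.
  intros HA HB e He.
  destruct (HA (e/2) ltac:(lra)) as [a1 [b1 [H11 [H12 H13]]]].
  destruct (HB (e/2) ltac:(lra)) as [a2 [b2 [H21 [H22 H23]]]].
  set (a := fun k => if Nat.even k then a1 (Nat.div2 k) else a2 (Nat.div2 k)).
  set (b := fun k => if Nat.even k then b1 (Nat.div2 k) else b2 (Nat.div2 k)).
  assert (Hsum : forall N, rsum (2 * N) (fun k => b k - a k) =
    rsum N (fun k => b1 k - a1 k) + rsum N (fun k => b2 k - a2 k)).
  { induction N; [simpl; lra|]. replace (2 * S N)%nat with (S (S (2 * N))) by lia.
    transitivity (rsum (2 * N) (fun k => b k - a k) + (b (2 * N)%nat - a (2 * N)%nat)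
                  + (b (S (2 * N)) - a (S (2 * N)))); [reflexivity|].
    rewrite IHN. unfold a, b.
    rewrite Nat.even_succ, Nat.odd_mul, Nat.even_mul, Nat.div2_succ_double, Nat.div2_double.
    simpl. lra. }
  exists a, b. repeat split.
  - intros k; unfold a, b; destruct (Nat.even k); auto.
  - intros x [Hx | Hx].
    + destruct (H12 x Hx) as [j Hj]. exists (2 * j)%nat.
      unfold a, b. rewrite Nat.even_mul, Nat.div2_double. auto.
    + destruct (H22 x Hx) as [j Hj]. exists (S (2 * j)).
      unfold a, b. rewrite Nat.even_succ, Nat.odd_mul, Nat.div2_succ_double. auto.
  - intros N. apply Rle_trans with (rsum (2 * N) (fun k => b k - a k)).
    + apply rsum_mono; [lia|]. intros i _. unfold a, b.
      destruct (Nat.even i); [specialize (H11 (Nat.div2 i)) | specialize (H21 (Nat.div2 i))]; lra.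
    + rewrite Hsum. specialize (H13 N). specialize (H23 N). lra.
Qed.

Lemma negligible_point c : negligible (fun x => x = c).
Proof.
  intros e He.
  exists (fun k => match k with O => c - e / 4 | S _ => c end),
         (fun k => match k with O => c + e / 4 | S _ => c end).
  repeat split.
  - intros [|k]; lra.
  - intros x ->. exists O. lra.
  - assert (H : forall N, rsum (S N) (fun k => match k with O => c + e / 4 | S _ => c end -
                                          match k with O => c - e / 4 | S _ => c end) = e / 2).
    { induction N; [simpl; lra|]. simpl rsum in *. lra. }
    intros [|N]; [simpl; lra|]. rewrite H. lra.
Qed.

Lemma ae_on_weaken a b c d (P Q : R -> Prop) : ae_on a b P -> a <= c -> d <= b ->
  (forall x, c < x < d -> P x -> Q x) -> ae_on c d Q.
Proof.
  intros H Hac Hdb HPQ. apply (negligible_subset _ _ H).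
  intros x [Hx HQ]. split; [lra|]. intros HP. exact (HQ (HPQ x Hx HP)).
Qed.

Lemma ae_on_and a b (P Q : R -> Prop) : ae_on a b P -> ae_on a b Q -> ae_on a b (fun t => P t /\ Q t).
Proof.
  intros HP HQ. apply (negligible_subset _ _ (negligible_union _ _ HP HQ)).
  intros x [Hx Hn]. apply not_and_or in Hn. tauto.
Qed.

(** * Real functions on an interval *)

Lemma Rabs_le_bounds x y : Rabs x <= y -> - y <= x <= y.
Proof. split_Rabs; lra. Qed.

Lemma Rabs_le_eps_eq0 x : (forall e, 0 < e -> Rabs x <= e) -> x = 0.
Proof.
  intros H. destruct (Req_dec x 0) as [|Hx]; auto.
  pose proof (Rabs_pos_lt x Hx). specialize (H (Rabs x / 2)). lra.
Qed.

Lemma Rabs_le_lin_eq0 x K H : 0 < H -> 0 <= K -> (forall h, 0 < h < H -> Rabs x <= K * h) -> x = 0.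
Proof.
  intros HH HK Hh. apply Rabs_le_eps_eq0. intros e He.
  set (h := Rmin (H / 2) (e / (K + 1))).
  assert (0 < h) by (apply Rmin_pos; [lra | apply Rdiv_lt_0_compat; lra]).
  assert (h <= H / 2) by apply Rmin_l.
  assert (h * (K + 1) <= e).
  { apply Rle_trans with (e / (K + 1) * (K + 1)); [apply Rmult_le_compat_r; [lra | apply Rmin_r]|].
    right; field; lra. }
  specialize (Hh h ltac:(lra)). nra.
Qed.

Lemma exists_point_toward s y D : y <> s -> 0 < D -> exists t,
  Rmin s y <= t <= Rmax s y /\ 0 < Rabs (t - s) < D /\ Rabs (t - s) <= Rabs (y - s) /\
  0 < (t - s) * (y - s).
Proof.
  intros Hys HD. assert (Hy : 0 < Rabs (y - s)) by (apply Rabs_pos_lt; lra).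
  set (th := Rmin (1/2) (D / (2 * Rabs (y - s)))).
  assert (0 < th) by (apply Rmin_pos; [lra | apply Rdiv_lt_0_compat; lra]).
  assert (th <= 1/2) by apply Rmin_l.
  assert (Rabs (y - s) * th <= D / 2).
  { apply Rle_trans with (Rabs (y - s) * (D / (2 * Rabs (y - s)))).
    - apply Rmult_le_compat_l; [lra | apply Rmin_r].
    - right; field; lra. }
  exists (s + (y - s) * th).
  replace (s + (y - s) * th - s) with ((y - s) * th) by ring.
  rewrite Rabs_mult, (Rabs_right th) by lra.
  assert (0 < (y - s) * (y - s)) by (apply Rsqr_pos_lt; lra).
  unfold Rmin, Rmax; destruct Rle_dec; repeat split; nra.
Qed.

Lemma between_dist s t r D : Rmin s t <= r <= Rmax s t -> Rabs (t - s) < D -> Rabs (r - s) < D.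
Proof. unfold Rmin, Rmax; destruct Rle_dec; split_Rabs; lra. Qed.

Lemma same_side_between_dist s t t' r D : 0 < (t - s) * (t' - s) -> Rmin t t' <= r <= Rmax t t' ->
  Rabs (t - s) < D -> Rabs (t' - s) < D -> 0 < Rabs (r - s) < D.
Proof. unfold Rmin, Rmax; destruct Rle_dec; split_Rabs; nra. Qed.

Lemma cousin (P : R -> R -> Prop) a b : a <= b ->
  (forall c d e, a <= c -> c <= d -> d <= e -> e <= b -> P c d -> P d e -> P c e) ->
  (forall x, a <= x <= b -> exists delta, 0 < delta /\
      forall c d, a <= c -> c <= x -> x <= d -> d <= b -> d - c < delta -> P c d) ->
  P a b.
Proof.
  intros Hab Htr Hloc.
  set (E := fun y => a <= y <= b /\ P a y).
  assert (HE : E a).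
  { destruct (Hloc a) as [delta [Hd H]]; [lra|]. split; [lra|]. apply H; lra. }
  destruct (completeness E (ex_intro _ b (fun y (Ey : E y) => proj2 (proj1 Ey))) (ex_intro _ a HE))
    as [s [Hs1 Hs2]].
  assert (a <= s) by (apply Hs1; auto).
  assert (s <= b) by (apply Hs2; intros y [? _]; lra).
  destruct (Hloc s) as [delta [Hd Hs]]; [lra|].
  assert (Hx : exists x, E x /\ s - delta / 2 < x).
  { apply NNPP; intro Hn. assert (s <= s - delta / 2); [|lra].
    apply Hs2. intros y Ey. apply Rnot_lt_le. intro. apply Hn. eauto. }
  destruct Hx as [x [[Hx Pax] Hx2]].
  assert (x <= s) by (apply Hs1; split; auto).
  set (d := Rmin b (s + delta / 2)).
  assert (s <= d <= b /\ d <= s + delta / 2) by (unfold d, Rmin; destruct Rle_dec; lra).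
  assert (Ed : E d) by (split; [lra|]; apply Htr with x; auto; try lra; apply Hs; lra).
  assert (d <= s) by (apply Hs1; auto).
  assert (Hdb : d = b) by (unfold d, Rmin in *; destruct Rle_dec; lra).
  rewrite <- Hdb. apply Ed.
Qed.

Definition lipon (a b : R) (h : R -> R) := exists K, 0 <= K /\
  forall s t, a <= s <= b -> a <= t <= b -> Rabs (h s - h t) <= K * Rabs (s - t).

Lemma lipon_sub a b c d h : a <= c -> d <= b -> lipon a b h -> lipon c d h.
Proof. intros H1 H2 [K [HK H]]. exists K; split; auto. intros; apply H; lra. Qed.

Lemma lipon_const a b c : lipon a b (fun _ => c).
Proof.
  exists 0; split; [lra|]. intros. rewrite Rminus_diag, Rabs_R0, Rmult_0_l. lra.
Qed.

Lemma lipon_id a b : lipon a b (fun t => t).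
Proof. exists 1; split; intros; lra. Qed.

Lemma lipon_opp a b f : lipon a b f -> lipon a b (fun t => - f t).
Proof.
  intros [K [HK H]]. exists K; split; auto. intros s t Hs Ht.
  rewrite <- Rabs_Ropp. replace (- (- f s - - f t)) with (f s - f t) by ring. auto.
Qed.

Lemma lipon_plus a b f g : lipon a b f -> lipon a b g -> lipon a b (fun t => f t + g t).
Proof.
  intros [K1 [HK1 H1]] [K2 [HK2 H2]]. exists (K1 + K2); split; [lra|]. intros s t Hs Ht.
  replace (f s + g s - (f t + g t)) with ((f s - f t) + (g s - g t)) by ring.
  pose proof (Rabs_triang (f s - f t) (g s - g t)).
  specialize (H1 s t Hs Ht). specialize (H2 s t Hs Ht). lra.
Qed.

Lemma lipon_minus a b f g : lipon a b f -> lipon a b g -> lipon a b (fun t => f t - g t).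
Proof. intros Hf Hg. apply (lipon_plus a b f (fun t => - g t)); auto. now apply lipon_opp. Qed.

Lemma lipon_bounded a b h : a <= b -> lipon a b h ->
  exists B, 0 <= B /\ forall t, a <= t <= b -> Rabs (h t) <= B.
Proof.
  intros Hab [K [HK H]]. exists (Rabs (h a) + K * (b - a)).
  split; [pose proof (Rabs_pos (h a)); nra|]. intros t Ht.
  specialize (H t a Ht ltac:(lra)). rewrite (Rabs_right (t - a)) in H by lra.
  pose proof (Rabs_triang (h t - h a) (h a)). replace (h t - h a + h a) with (h t) in * by ring. nra.
Qed.

Lemma lipon_mult a b f g : a <= b -> lipon a b f -> lipon a b g -> lipon a b (fun t => f t * g t).
Proof.
  intros Hab Hf Hg.
  destruct (lipon_bounded a b f Hab Hf) as [Bf [HBf Hbf]].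
  destruct (lipon_bounded a b g Hab Hg) as [Bg [HBg Hbg]].
  destruct Hf as [K1 [HK1 H1]], Hg as [K2 [HK2 H2]].
  exists (K1 * Bg + Bf * K2). split; [nra|]. intros s t Hs Ht.
  replace (f s * g s - f t * g t) with ((f s - f t) * g s + f t * (g s - g t)) by ring.
  eapply Rle_trans; [apply Rabs_triang|]. rewrite !Rabs_mult.
  specialize (H1 s t Hs Ht). specialize (H2 s t Hs Ht). specialize (Hbf t Ht). specialize (Hbg s Hs).
  pose proof (Rabs_pos (f s - f t)). pose proof (Rabs_pos (g s - g t)).
  pose proof (Rabs_pos (s - t)). pose proof (Rabs_pos (f t)). pose proof (Rabs_pos (g s)).
  assert (Rabs (f s - f t) * Rabs (g s) <= K1 * Rabs (s - t) * Bg) by (apply Rmult_le_compat; auto).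
  assert (Rabs (f t) * Rabs (g s - g t) <= Bf * (K2 * Rabs (s - t))) by (apply Rmult_le_compat; auto).
  nra.
Qed.

Lemma lipon_inv a b g c0 : 0 < c0 -> lipon a b g -> (forall t, a <= t <= b -> c0 <= g t) ->
  lipon a b (fun t => / g t).
Proof.
  intros Hc [K [HK H]] Hg. exists (K / (c0 * c0)).
  split; [apply Rmult_le_pos; [lra | left; apply Rinv_0_lt_compat; nra]|].
  intros s t Hs Ht. pose proof (Hg s Hs). pose proof (Hg t Ht).
  replace (/ g s - / g t) with ((g t - g s) * / (g s * g t)) by (field; lra).
  rewrite Rabs_mult, Rabs_inv, (Rabs_right (g s * g t)), <- Rabs_Ropp by nra.
  replace (- (g t - g s)) with (g s - g t) by ring.
  specialize (H s t Hs Ht). pose proof (Rabs_pos (s - t)). pose proof (Rabs_pos (g s - g t)).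
  assert (/ (g s * g t) <= / (c0 * c0)) by (apply Rinv_le_contravar; nra).
  assert (0 < / (g s * g t)) by (apply Rinv_0_lt_compat; nra).
  apply Rle_trans with (K * Rabs (s - t) * / (c0 * c0)); [apply Rmult_le_compat; lra|].
  unfold Rdiv; nra.
Qed.

Lemma lipon_dot a b n (x y : R -> vec) : a <= b ->
  (forall i, (i < n)%nat -> lipon a b (fun t => x t i)) ->
  (forall i, (i < n)%nat -> lipon a b (fun t => y t i)) ->
  lipon a b (fun t => dot n (x t) (y t)).
Proof.
  intros Hab Hx Hy. unfold dot. induction n; simpl; [apply lipon_const|].
  apply (lipon_plus a b (fun t => rsum n (fun i => x t i * y t i))).
  - apply IHn; auto.
  - apply (lipon_mult a b (fun t => x t n) (fun t => y t n)); auto.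
Qed.

Lemma W1inf_lipon n L g g' : W1inf n 0 L g g' -> forall i, (i < n)%nat -> lipon 0 L (fun t => g t i).
Proof.
  intros [[K HK] _] i Hi. exists (Rabs K); split; [apply Rabs_pos|].
  intros s t Hs Ht. eapply Rle_trans; [apply HK; auto|].
  pose proof (Rle_abs K). pose proof (Rabs_pos (s - t)). nra.
Qed.

Definition cont_within (a b : R) (h : R -> R) (t : R) := forall eps, 0 < eps ->
  exists delta, 0 < delta /\ forall s, a <= s <= b -> Rabs (s - t) < delta -> Rabs (h s - h t) < eps.

Lemma cont_within_limit a b h t :
  cont_within a b h t <-> limit1_in h (fun s => a <= s <= b) (h t) t.
Proof.
  split; intros H e He; destruct (H e He) as [d [Hd Hd']]; exists d; split; auto.
  - intros s [Hs Hst]. apply Hd'; auto.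
  - intros s Hs Hst. apply Hd'; auto.
Qed.

Lemma cont_within_const a b c t : cont_within a b (fun _ => c) t.
Proof.
  intros e He. exists 1. split; [lra|]. intros. rewrite Rminus_diag, Rabs_R0. lra.
Qed.

Lemma lipon_cont_within a b h t : lipon a b h -> a <= t <= b -> cont_within a b h t.
Proof.
  intros [K [HK H]] Ht e He. exists (e / (K + 1)). split; [apply Rdiv_lt_0_compat; lra|].
  intros s Hs Hd. specialize (H s t Hs Ht). pose proof (Rabs_pos (s - t)).
  assert (Rabs (s - t) * (K + 1) < e).
  { apply Rmult_lt_reg_r with (/ (K + 1)); [apply Rinv_0_lt_compat; lra|].
    replace (Rabs (s - t) * (K + 1) * / (K + 1)) with (Rabs (s - t)) by (field; lra). exact Hd. }
  nra.
Qed.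

Lemma cont_within_dot a b n (x y : R -> vec) t :
  (forall i, (i < n)%nat -> cont_within a b (fun s => x s i) t) ->
  (forall i, (i < n)%nat -> cont_within a b (fun s => y s i) t) ->
  cont_within a b (fun s => dot n (x s) (y s)) t.
Proof.
  intros Hx Hy. apply cont_within_limit. unfold dot. induction n; simpl.
  - exact (limit_free (fun _ => 0) _ t t).
  - apply limit_plus; [apply IHn; intros; [apply Hx | apply Hy]; lia|].
    apply limit_mul; apply cont_within_limit; auto.
Qed.

Lemma cont_within_pos_near a b h s : cont_within a b h s -> 0 < h s ->
  exists d, 0 < d /\ forall t, a <= t <= b -> Rabs (t - s) < d -> 0 < h t.
Proof.
  intros H Hs. destruct (H (h s / 2) ltac:(lra)) as [d [Hd Hd']].
  exists d; split; auto. intros t Ht Hts. specialize (Hd' t Ht Hts).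
  apply Rabs_def2 in Hd'. lra.
Qed.

Lemma lipon_pos_lower_bound a b g : a <= b -> lipon a b g -> (forall t, a <= t <= b -> 0 < g t) ->
  exists c0, 0 < c0 /\ forall t, a <= t <= b -> c0 <= g t.
Proof.
  intros Hab Hl Hp.
  apply (cousin (fun c d => exists c0, 0 < c0 /\ forall t, c <= t <= d -> c0 <= g t)); auto.
  - intros c d e _ _ _ _ [c1 [Hc1 H1]] [c2 [Hc2 H2]]. exists (Rmin c1 c2).
    split; [apply Rmin_pos; auto|]. intros t Ht. pose proof (Rmin_l c1 c2). pose proof (Rmin_r c1 c2).
    destruct (Rle_dec t d); [specialize (H1 t) | specialize (H2 t)]; lra.
  - intros x Hx. pose proof (Hp x Hx) as Hgx.
    destruct (lipon_cont_within a b g x Hl Hx (g x / 2) ltac:(lra)) as [d [Hd Hq]].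
    exists d; split; auto. intros c e Hc Hcx Hxe He Hce. exists (g x / 2). split; [lra|].
    intros t Ht. assert (Hr : Rabs (g t - g x) < g x / 2) by (apply Hq; [lra | apply Rabs_def1; lra]).
    apply Rabs_def2 in Hr. lra.
Qed.

Lemma derivable_pt_lim_dot n (x y : R -> vec) (x' y' : vec) t :
  (forall i, (i < n)%nat -> derivable_pt_lim (fun s => x s i) t (x' i)) ->
  (forall i, (i < n)%nat -> derivable_pt_lim (fun s => y s i) t (y' i)) ->
  derivable_pt_lim (fun s => dot n (x s) (y s)) t (dot n x' (y t) + dot n (x t) y').
Proof.
  intros Hx Hy. unfold dot. induction n; simpl.
  - replace (0 + 0) with 0 by ring. apply derivable_pt_lim_const.
  - set (X' := rsum n (fun i => x' i * y t i)). set (Y' := rsum n (fun i => x t i * y' i)).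
    replace (X' + x' n * y t n + (Y' + x t n * y' n)) with ((X' + Y') + (x' n * y t n + x t n * y' n))
      by ring.
    apply (derivable_pt_lim_plus (fun s => rsum n (fun i => x s i * y s i)) (fun s => x s n * y s n)).
    + apply IHn; intros; [apply Hx | apply Hy]; lia.
    + apply (derivable_pt_lim_mult (fun s => x s n) (fun s => y s n)); auto.
Qed.

Lemma derivable_pt_lim_dot_const n (z : vec) (y : R -> vec) (y' : vec) t :
  (forall i, (i < n)%nat -> derivable_pt_lim (fun s => y s i) t (y' i)) ->
  derivable_pt_lim (fun s => dot n z (y s)) t (dot n z y').
Proof.
  intros Hy. replace (dot n z y') with (dot n (fun _ => 0) (y t) + dot n z y').
  - apply (derivable_pt_lim_dot n (fun _ => z)); auto. intros; apply derivable_pt_lim_const.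
  - rewrite dot_sym, dot_vzero_r by (intros ? ?; auto). ring.
Qed.

Lemma derivable_pt_lim_local f x l e : derivable_pt_lim f x l -> 0 < e ->
  exists d, 0 < d /\ forall y, Rabs (y - x) < d -> Rabs (f y - f x - l * (y - x)) <= e * Rabs (y - x).
Proof.
  intros H He. destruct (H e He) as [[d Hd] Hd2]. exists d; split; auto.
  intros y Hy. destruct (Req_dec y x) as [->|Hyx].
  - replace (f x - f x - l * (x - x)) with 0 by ring. rewrite Rminus_diag, Rabs_R0; lra.
  - specialize (Hd2 (y - x) ltac:(lra) Hy). replace (x + (y - x)) with y in Hd2 by ring.
    replace (f y - f x - l * (y - x)) with (((f y - f x) / (y - x) - l) * (y - x)) by (field; lra).
    rewrite Rabs_mult. pose proof (Rabs_pos (y - x)). nra.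
Qed.

Definition overlap_length (al be c d : R) := Rmax 0 (Rmin be d - Rmax al c).

Lemma overlap_length_add al be c d e : c <= d -> d <= e -> al <= be ->
  overlap_length al be c d + overlap_length al be d e = overlap_length al be c e.
Proof. intros. unfold overlap_length, Rmax, Rmin. repeat destruct Rle_dec; lra. Qed.

Lemma overlap_length_nonneg al be c d : 0 <= overlap_length al be c d.
Proof. apply Rmax_l. Qed.

Lemma overlap_length_le al be c d : al <= be -> overlap_length al be c d <= be - al.
Proof. intros. unfold overlap_length, Rmax, Rmin. repeat destruct Rle_dec; lra. Qed.

Lemma overlap_length_inside al be c d : al < c -> c <= d -> d < be ->
  overlap_length al be c d = d - c.
Proof. intros. unfold overlap_length, Rmax, Rmin. repeat destruct Rle_dec; lra. Qed.

(* Cousin's lemma with a gauge that pays for the increment of [h] near a point of [N] with the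
   Lipschitz bound and the length of an interval covering that point, and elsewhere with the
   derivative. *)
Lemma lipschitz_deriv_le_cover h a b M K K' e1 (ak bk : nat -> R) (N : R -> Prop) :
  a <= b -> 0 < e1 -> 0 <= K' -> K <= M + K' -> (forall j, ak j <= bk j) ->
  (forall x, N x -> exists j, ak j < x < bk j) ->
  (forall s t, a <= s <= b -> a <= t <= b -> Rabs (h s - h t) <= K * Rabs (s - t)) ->
  (forall x, a <= x <= b -> ~ N x -> exists l, derivable_pt_lim h x l /\ l <= M) ->
  exists m, h b - h a <= (M + e1) * (b - a) + K' * rsum m (fun j => overlap_length (ak j) (bk j) a b).
Proof.
  intros Hab He1 HK' HKM Hle Hcov Hlip Hd.
  set (len c d m := rsum m (fun j => overlap_length (ak j) (bk j) c d)).
  assert (Hlen : forall c d m m', (m <= m')%nat -> len c d m <= len c d m').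
  { intros. apply rsum_mono; auto. intros; apply overlap_length_nonneg. }
  apply (cousin (fun c d => exists m, h d - h c <= (M + e1) * (d - c) + K' * len c d m)); auto.
  - intros c d f Hc Hcd Hdf Hf [m1 H1] [m2 H2]. exists (Nat.max m1 m2).
    pose proof (Hlen c d m1 (Nat.max m1 m2) ltac:(lia)).
    pose proof (Hlen d f m2 (Nat.max m1 m2) ltac:(lia)).
    assert (len c f (Nat.max m1 m2) = len c d (Nat.max m1 m2) + len d f (Nat.max m1 m2)).
    { unfold len. rewrite <- rsum_plus. apply rsum_ext. intros. rewrite overlap_length_add; auto. }
    nra.
  - intros x Hx. destruct (classic (N x)) as [Nx | Nx].
    + destruct (Hcov x Nx) as [j Hj].
      exists (Rmin (x - ak j) (bk j - x)). split; [apply Rmin_pos; lra|].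
      intros c d Hc Hcx Hxd Hdb Hcd. exists (S j).
      pose proof (Rmin_l (x - ak j) (bk j - x)). pose proof (Rmin_r (x - ak j) (bk j - x)).
      assert (d - c <= len c d (S j)).
      { rewrite <- (overlap_length_inside (ak j) (bk j) c d) by lra.
        apply (rsum_term (S j) (fun j => overlap_length (ak j) (bk j) c d)); [lia|].
        intros; apply overlap_length_nonneg. }
      assert (Hq : Rabs (h d - h c) <= K * Rabs (d - c)) by (apply Hlip; lra).
      rewrite (Rabs_right (d - c)) in Hq by lra. apply Rabs_le_bounds in Hq. nra.
    + destruct (Hd x Hx Nx) as [l [Hl HlM]].
      destruct (derivable_pt_lim_local h x l e1 Hl He1) as [delta [Hdelta Hloc]].
      exists delta; split; auto. intros c d Hc Hcx Hxd Hdb Hcd. exists 0%nat. unfold len; simpl.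
      assert (Hq1 := Hloc d ltac:(apply Rabs_def1; lra)).
      assert (Hq2 := Hloc c ltac:(apply Rabs_def1; lra)).
      rewrite (Rabs_right (d - x)) in Hq1 by lra. rewrite (Rabs_left1 (c - x)) in Hq2 by lra.
      apply Rabs_le_bounds in Hq1. apply Rabs_le_bounds in Hq2. nra.
Qed.

Lemma lipon_deriv_le_off_negligible h a b M N : a <= b -> negligible N -> lipon a b h ->
  (forall x, a <= x <= b -> ~ N x -> exists l, derivable_pt_lim h x l /\ l <= M) ->
  h b - h a <= M * (b - a).
Proof.
  intros Hab HN [K [HK Hlip]] Hd. apply Rle_plus_epsilon. intros e He.
  set (K' := K + Rabs M + 1).
  assert (0 < K') by (unfold K'; pose proof (Rabs_pos M); lra).
  assert (HKM : K <= M + K') by (unfold K'; pose proof (Rle_abs (- M)); rewrite Rabs_Ropp in *; lra).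
  set (e1 := e / (2 * (b - a + 1))).
  assert (He1 : 0 < e1) by (apply Rdiv_lt_0_compat; lra).
  assert (e1 * (b - a) <= e / 2).
  { unfold e1. apply Rmult_le_reg_r with (2 * (b - a + 1)); [lra|]. field_simplify; nra. }
  destruct (HN (e / (2 * K'))) as [ak [bk [Hle [Hcov Hsum]]]]; [apply Rdiv_lt_0_compat; lra|].
  destruct (lipschitz_deriv_le_cover h a b M K K' e1 ak bk N) as [m Hm]; auto; [lra|].
  assert (K' * rsum m (fun j => overlap_length (ak j) (bk j) a b) <= e / 2).
  { replace (e / 2) with (K' * (e / (2 * K'))) by (field; lra).
    apply Rmult_le_compat_l; [lra|]. eapply Rle_trans; [| apply (Hsum m)].
    apply rsum_le. intros; apply overlap_length_le; auto. }
  nra.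
Qed.

Lemma lipon_ae_deriv_le h a b M : a <= b -> lipon a b h ->
  ae_on a b (fun x => exists l, derivable_pt_lim h x l /\ l <= M) -> h b - h a <= M * (b - a).
Proof.
  intros Hab Hl Hae.
  assert (Hnegl := negligible_union _ _ Hae
                    (negligible_union _ _ (negligible_point a) (negligible_point b))).
  apply (lipon_deriv_le_off_negligible h a b M _ Hab Hnegl Hl).
  intros x Hx HN. apply NNPP. intros Hn. apply HN.
  destruct (Req_dec x a); [tauto|]. destruct (Req_dec x b); [tauto|]. left. split; [lra | auto].
Qed.

Lemma lipon_ae_deriv_ge h a b m : a <= b -> lipon a b h ->
  ae_on a b (fun x => exists l, derivable_pt_lim h x l /\ m <= l) -> m * (b - a) <= h b - h a.
Proof.
  intros Hab Hl Hae.
  assert (H : - h b - - h a <= - m * (b - a)); [|lra].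
  apply (lipon_ae_deriv_le (fun t => - h t)); auto using lipon_opp.
  apply (ae_on_weaken a b a b _ _ Hae); try lra.
  intros x _ [l [Hd Hm]]. exists (- l). split; [now apply derivable_pt_lim_opp | lra].
Qed.

Lemma lipon_ae_deriv_near h a b c e : a <= b -> lipon a b h ->
  ae_on a b (fun x => exists l, derivable_pt_lim h x l /\ Rabs (l - c) <= e) ->
  Rabs (h b - h a - c * (b - a)) <= e * (b - a).
Proof.
  intros Hab Hl Hae. apply Rabs_le. split.
  - assert ((c - e) * (b - a) <= h b - h a); [|nra].
    apply lipon_ae_deriv_ge; auto. apply (ae_on_weaken a b a b _ _ Hae); try lra.
    intros x _ [l [Hd Hle]]. apply Rabs_le_bounds in Hle. exists l; split; [auto | lra].
  - assert (h b - h a <= (c + e) * (b - a)); [|nra].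
    apply lipon_ae_deriv_le; auto. apply (ae_on_weaken a b a b _ _ Hae); try lra.
    intros x _ [l [Hd Hle]]. apply Rabs_le_bounds in Hle. exists l; split; [auto | lra].
Qed.

Lemma lipon_ae_deriv_pos_punctured h a b s d m : a <= s <= b -> 0 < m -> lipon a b h ->
  ae_on a b (fun x => Rabs (x - s) < d -> exists l, derivable_pt_lim h x l /\ m <= l) ->
  forall t, a <= t <= b -> 0 < Rabs (t - s) < d -> h t <> h s.
Proof.
  intros Hs Hm Hl Hae t Ht Hts.
  assert (Hincr : forall c e, a <= c -> c < e -> e <= b -> Rabs (c - s) < d -> Rabs (e - s) < d ->
    m * (e - c) <= h e - h c).
  { intros c e Hc Hce Heb Hcs Hes. apply lipon_ae_deriv_ge; [lra | eapply lipon_sub; eauto |].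
    apply (ae_on_weaken a b c e _ _ Hae); auto.
    intros x Hx Hder. apply Hder. apply Rabs_def2 in Hcs, Hes. apply Rabs_def1; lra. }
  assert (t <> s) by (intros ->; rewrite Rminus_diag, Rabs_R0 in Hts; lra).
  destruct (Rlt_or_le s t).
  - assert (m * (t - s) <= h t - h s) by (apply Hincr; try (rewrite Rminus_diag, Rabs_R0); lra). nra.
  - assert (m * (s - t) <= h s - h t) by (apply Hincr; try (rewrite Rminus_diag, Rabs_R0); lra). nra.
Qed.

Lemma lipon_ae_deriv0_const h a b : a <= b -> lipon a b h ->
  ae_on a b (fun x => derivable_pt_lim h x 0) -> h b = h a.
Proof.
  intros Hab Hl Hae.
  assert (Hnear : Rabs (h b - h a - 0 * (b - a)) <= 0 * (b - a));
    [|apply Rabs_le_bounds in Hnear; lra].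
  apply lipon_ae_deriv_near, (ae_on_weaken a b a b _ _ Hae); auto; try lra.
  intros x _ Hd. exists 0. rewrite Rminus_diag, Rabs_R0. split; [auto | lra].
Qed.

Lemma ae_on_witness a b (P : R -> Prop) s m : ae_on a b P -> a < b -> a <= s <= b -> 0 < m ->
  exists t, a < t < b /\ Rabs (t - s) < m /\ P t.
Proof.
  intros H Hab Hs Hm.
  set (c := Rmax a (s - m / 2)). set (d := Rmin b (s + m / 2)).
  assert (a <= c < d /\ d <= b /\ s - m < c /\ d < s + m)
    by (unfold c, d, Rmax, Rmin; repeat destruct Rle_dec; lra).
  apply NNPP. intros Hn.
  assert (d - c <= 0 * (d - c)); [|lra].
  apply (lipon_ae_deriv_le (fun t => t)); [lra | apply lipon_id|].
  apply (ae_on_weaken a b c d _ _ H); try lra.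
  intros x Hx Px. exfalso. apply Hn.
  exists x. split; [lra | split; [apply Rabs_def1; lra | exact Px]].
Qed.

Lemma cont_within_ae_value a b F s c d : a < b -> a <= s <= b -> 0 < d -> cont_within a b F s ->
  ae_on a b (fun t => Rabs (t - s) < d -> F t = c) -> F s = c.
Proof.
  intros Hab Hs Hd Hc Hae. apply Rminus_diag_uniq, Rabs_le_eps_eq0. intros e He.
  destruct (Hc e He) as [d' [Hd' Hc']].
  destruct (ae_on_witness a b _ s (Rmin d d') Hae Hab Hs) as [t [Ht [Hts HF]]];
    [apply Rmin_pos; auto|].
  rewrite <- (HF ltac:(pose proof (Rmin_l d d'); lra)), <- Rabs_Ropp.
  replace (- (F s - F t)) with (F t - F s) by ring.
  left. apply Hc'; [lra|]. pose proof (Rmin_r d d'). lra.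
Qed.

Lemma lipon_ae_deriv_expansion a b h h' s : a <= s <= b -> lipon a b h ->
  ae_on a b (fun x => derivable_pt_lim h x (h' x)) -> cont_within a b h' s ->
  forall e, 0 < e -> exists d, 0 < d /\ forall t, a <= t <= b -> Rabs (t - s) < d ->
    Rabs (h t - h s - h' s * (t - s)) <= e * Rabs (t - s).
Proof.
  intros Hs Hl Hae Hc e He. destruct (Hc e He) as [d [Hd Hd']].
  exists d; split; auto. intros t Ht Hts.
  assert (Hnear : forall c d', a <= c -> c <= d' -> d' <= b ->
    (forall x, c < x < d' -> Rabs (x - s) < d) ->
    Rabs (h d' - h c - h' s * (d' - c)) <= e * (d' - c)).
  { intros c d' Hac Hcd Hdb Hx. apply lipon_ae_deriv_near; auto; [eapply lipon_sub; eauto|].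
    apply (ae_on_weaken a b c d' _ _ Hae); auto.
    intros x Hcx Hdx. exists (h' x). split; auto. left. apply Hd'; auto; lra. }
  destruct (Rle_or_lt s t).
  - rewrite (Rabs_right (t - s)) by lra. apply Hnear; try lra.
    intros x Hx. apply Rabs_def1; apply Rabs_def2 in Hts; lra.
  - rewrite (Rabs_left (t - s)), <- Rabs_Ropp by lra.
    replace (- (h t - h s - h' s * (t - s))) with (h s - h t - h' s * (s - t)) by ring.
    replace (e * - (t - s)) with (e * (s - t)) by ring. apply Hnear; try lra.
    intros x Hx. apply Rabs_def1; apply Rabs_def2 in Hts; lra.
Qed.

Lemma interval_propagation_right (I Z : R -> Prop) t0 : is_interval I -> I t0 ->
  (exists d, 0 < d /\ forall y, I y -> Rabs (y - t0) < d -> Z y) ->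
  (forall x, I x -> exists d, 0 < d /\ forall y y', I y -> I y' -> Rabs (y - x) < d ->
     Rabs (y' - x) < d -> y <> x -> Z y -> Z y') ->
  forall x, I x -> t0 <= x -> Z x.
Proof.
  intros HI Ht0 [d0 [Hd0 Hstart]] Hprop x1 Hx1 Htx1. apply NNPP; intro Hn.
  assert (Hx1t : t0 < x1).
  { destruct Htx1 as [|<-]; auto. exfalso.
    apply Hn, Hstart; auto. rewrite Rminus_diag, Rabs_R0; lra. }
  set (E := fun y => t0 <= y <= x1 /\ forall z, t0 <= z <= y -> Z z).
  assert (HE : E t0).
  { split; [lra|]. intros z Hz. replace z with t0 by lra.
    apply Hstart; auto. rewrite Rminus_diag, Rabs_R0; lra. }
  destruct (completeness E (ex_intro _ x1 (fun y (Ey : E y) => proj2 (proj1 Ey))) (ex_intro _ t0 HE))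
    as [S [HS1 HS2]].
  assert (t0 <= S) by (apply HS1; auto).
  assert (S <= x1) by (apply HS2; intros y [? _]; lra).
  assert (HI' : forall y, t0 <= y <= x1 -> I y) by (intros; apply (HI t0 x1); auto).
  assert (Hlt : forall y, t0 <= y < S -> Z y).
  { intros y Hy. apply NNPP; intro Hny. assert (S <= y); [|lra].
    apply HS2. intros e [He1 He2]. apply Rnot_lt_le. intro. apply Hny, He2; lra. }
  destruct (Hprop S (HI' S ltac:(lra))) as [d [Hd HdS]].
  assert (Hy : exists y, t0 <= y <= x1 /\ Rabs (y - S) < d /\ y <> S /\ Z y).
  { destruct (Req_dec S t0) as [HS0 | HS0].
    - set (y := t0 + Rmin (x1 - t0) (Rmin d d0) / 2).
      assert (0 < Rmin (x1 - t0) (Rmin d d0) <= x1 - t0 /\ Rmin (x1 - t0) (Rmin d d0) <= d /\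
              Rmin (x1 - t0) (Rmin d d0) <= d0)
        by (unfold Rmin; repeat destruct Rle_dec; lra).
      exists y. unfold y. repeat split; try lra; [apply Rabs_def1; lra|].
      apply Hstart; [apply HI'; lra | apply Rabs_def1; lra].
    - exists (Rmax t0 (S - d / 2)).
      assert (t0 <= Rmax t0 (S - d / 2) < S /\ S - d / 2 <= Rmax t0 (S - d / 2))
        by (unfold Rmax; destruct Rle_dec; lra).
      repeat split; try lra; [apply Rabs_def1; lra | apply Hlt; lra]. }
  destruct Hy as [y [Hy1 [Hy2 [Hy3 Zy]]]].
  assert (HZ : forall y', t0 <= y' <= x1 -> Rabs (y' - S) < d -> Z y')
    by (intros y' Hy' Hy'S; apply (HdS y y'); auto).
  destruct (Rlt_or_le x1 (S + d)).
  - apply Hn, HZ; [lra | apply Rabs_def1; lra].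
  - assert (S + d / 2 <= S); [|lra]. apply HS1. split; [lra|].
    intros z Hz. destruct (Rlt_or_le z S); [apply Hlt; lra|]. apply HZ; [lra | apply Rabs_def1; lra].
Qed.

Lemma interval_propagation (I Z : R -> Prop) t0 : is_interval I -> I t0 ->
  (exists d, 0 < d /\ forall y, I y -> Rabs (y - t0) < d -> Z y) ->
  (forall x, I x -> exists d, 0 < d /\ forall y y', I y -> I y' -> Rabs (y - x) < d ->
     Rabs (y' - x) < d -> y <> x -> Z y -> Z y') ->
  forall x, I x -> Z x.
Proof.
  intros HI Ht0 Hstart Hprop x Hx. destruct (Rle_or_lt t0 x) as [Htx | Hxt].
  - exact (interval_propagation_right I Z t0 HI Ht0 Hstart Hprop x Hx Htx).
  - assert (Hrefl : forall a b, Rabs (- a - b) = Rabs (a - - b))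
      by (intros; rewrite <- Rabs_Ropp; f_equal; ring).
    rewrite <- (Ropp_involutive x).
    apply (interval_propagation_right (fun y => I (- y)) (fun y => Z (- y)) (- t0)); try lra.
    + intros a b c Ha Hb Hc. apply (HI (- b) (- a)); auto; lra.
    + rewrite Ropp_involutive; auto.
    + destruct Hstart as [d [Hd H]]. exists d; split; auto.
      intros y Hy Hyt. apply H; auto. rewrite Hrefl; auto.
    + intros x' Hx'. destruct (Hprop (- x') Hx') as [d [Hd H]]. exists d; split; auto.
      intros y y' Hy Hy' Hyx Hyx' Hne.
      apply H; auto; try (rewrite Hrefl, Ropp_involutive; auto). lra.
    + rewrite Ropp_involutive; auto.
Qed.

Lemma lower_bound_of_inv_bound (beta : R -> R) L C : 0 <= L ->
  (forall t, 0 <= t <= L -> 0 < beta t) -> (forall t, 0 <= t <= L -> / beta t <= C) ->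
  0 < / C /\ forall t, 0 <= t <= L -> / C <= beta t.
Proof.
  intros HL Hpos Hinv.
  assert (HC : 0 < C).
  { specialize (Hinv 0 ltac:(lra)). pose proof (Rinv_0_lt_compat _ (Hpos 0 ltac:(lra))). lra. }
  split; [now apply Rinv_0_lt_compat|]. intros t Ht.
  rewrite <- (Rinv_inv (beta t)). apply Rinv_le_contravar; auto.
  now apply Rinv_0_lt_compat, Hpos.
Qed.

(** * The curve [tau] on a component *)

(* For [z] orthogonal to [lam], [Qz] is the squared [z]-component of the unit vector along
   [tau - (lam . tau) lam]. *)
Definition Qz n (lam z : vec) (tau : R -> vec) t :=
  dot n z (tau t) * dot n z (tau t) / (1 - dot n lam (tau t) * dot n lam (tau t)).

Lemma Qz_eq0_iff n lam z tau t : dot n lam (tau t) * dot n lam (tau t) < 1 ->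
  Qz n lam z tau t = 0 <-> dot n z (tau t) = 0.
Proof.
  unfold Qz. intros Hg. split; intros H.
  - unfold Rdiv in H. apply Rmult_integral in H. destruct H as [H | H].
    + apply Rmult_integral in H. tauto.
    + exfalso. revert H. apply Rinv_neq_0_compat. lra.
  - rewrite H. unfold Rdiv. ring.
Qed.

Lemma Qz_nonneg n lam z tau t : dot n lam (tau t) * dot n lam (tau t) < 1 -> 0 <= Qz n lam z tau t.
Proof.
  intros Hg. unfold Qz, Rdiv. apply Rmult_le_pos; [nra|]. left. apply Rinv_0_lt_compat. lra.
Qed.

Section Component.

Variables (n : nat) (L k b0 : R) (beta : R -> R) (tau tau' u u' : R -> vec) (lam : vec).

Hypothesis HL : 0 < L.
Hypothesis Hk : 0 < k.
Hypothesis Hb0 : 0 < b0.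
Hypothesis Hlam : dot n lam lam = 1.
Hypothesis Hsphere : forall t, 0 <= t <= L -> dot n (tau t) (tau t) = 1.
Hypothesis Hbeta : forall t, 0 <= t <= L -> b0 <= beta t.
Hypothesis Htau_lip : forall i, (i < n)%nat -> lipon 0 L (fun t => tau t i).
Hypothesis Hu_lip : forall i, (i < n)%nat -> lipon 0 L (fun t => u t i).

Definition regular_point t :=
  (forall i, (i < n)%nat -> derivable_pt_lim (fun s => tau s i) t (tau' t i)) /\
  (forall i, (i < n)%nat -> derivable_pt_lim (fun s => u s i) t (u' t i)) /\
  veq n (fun i => u' t i + dot n (u t) (tau' t) * tau t i)
        (fun i => beta t * (lam i - dot n lam (tau t) * tau t i)) /\
  veq n (fun i => vnorm n (u t) * tau' t i) (fun i => k * u t i).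

Hypothesis Hreg : ae_on 0 L regular_point.
Hypothesis Hdep : forall t, (0 <= t <= L /\ 0 < k * vnorm n (u t)) ->
  lin_dep3 n (tau t) (tau' t) lam.
Hypothesis Hcont : forall t, (0 <= t <= L /\ 0 < k * vnorm n (u t)) ->
  vcont_within n 0 L tau' t.

Lemma tau_dot_lipon z a b : 0 <= a -> a <= b -> b <= L -> lipon a b (fun t => dot n z (tau t)).
Proof.
  intros Ha Hab Hb. apply (lipon_dot a b n (fun _ => z) tau); auto using lipon_const.
  intros i Hi. apply lipon_sub with 0 L; auto.
Qed.

Lemma gap_lipon a b : 0 <= a -> a <= b -> b <= L ->
  lipon a b (fun t => 1 - dot n lam (tau t) * dot n lam (tau t)).
Proof.
  intros Ha Hab Hb. apply (lipon_minus a b (fun _ => 1)); [apply lipon_const|].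
  apply (lipon_mult a b (fun t => dot n lam (tau t)) (fun t => dot n lam (tau t)));
    auto using tau_dot_lipon.
Qed.

Lemma gap_pos_near s : 0 <= s <= L -> dot n lam (tau s) * dot n lam (tau s) < 1 ->
  exists d, 0 < d /\ forall t, 0 <= t <= L -> Rabs (t - s) < d ->
    dot n lam (tau t) * dot n lam (tau t) < 1.
Proof.
  intros Hs Hgs.
  destruct (cont_within_pos_near 0 L _ s (lipon_cont_within _ _ _ _ (gap_lipon 0 L ltac:(lra)
    ltac:(lra) ltac:(lra)) Hs)) as [d [Hd H]]; [simpl; lra|].
  exists d; split; auto. intros t Ht Hts. specialize (H t Ht Hts). simpl in H. lra.
Qed.

Lemma tau_perp_deriv t : 0 < t < L ->
  (forall i, (i < n)%nat -> derivable_pt_lim (fun s => tau s i) t (tau' t i)) ->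
  dot n (tau t) (tau' t) = 0.
Proof.
  intros Ht Hd.
  assert (H := derivable_pt_lim_dot n tau tau (tau' t) (tau' t) t Hd Hd).
  assert (E : derive_pt _ t (exist _ _ H) = 0).
  { apply (deriv_maximum _ 0 L); try lra. intros x Hx1 Hx2. rewrite !Hsphere; lra. }
  rewrite (derive_pt_eq_0 _ _ _ _ H), dot_sym in E. lra.
Qed.

Lemma Qz_lipon z c d : 0 <= c -> c <= d -> d <= L ->
  (forall t, c <= t <= d -> dot n lam (tau t) * dot n lam (tau t) < 1) ->
  lipon c d (Qz n lam z tau).
Proof.
  intros Hc Hcd Hd Hg.
  destruct (lipon_pos_lower_bound c d _ Hcd (gap_lipon c d Hc Hcd Hd)) as [c0 [Hc0 Hlow]];
    [intros t Ht; specialize (Hg t Ht); lra|].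
  apply (lipon_mult c d (fun t => dot n z (tau t) * dot n z (tau t))
           (fun t => / (1 - dot n lam (tau t) * dot n lam (tau t)))); auto.
  - apply lipon_mult; auto using tau_dot_lipon.
  - apply lipon_inv with c0; auto using gap_lipon.
Qed.

(* [tau'] is a multiple of the tangential part [lam - (lam . tau) tau] of [lam]: [tau] moves in
   the plane of [tau] and [lam], and the direction of [tau - (lam . tau) lam] stays fixed. *)
Lemma Qz_deriv0 z x : 0 < x < L ->
  (forall i, (i < n)%nat -> derivable_pt_lim (fun s => tau s i) x (tau' x i)) ->
  dot n z lam = 0 -> dot n lam (tau x) * dot n lam (tau x) < 1 ->
  lin_dep3 n (tau x) (tau' x) lam -> derivable_pt_lim (Qz n lam z tau) x 0.
Proof.
  intros Hx Hd Hz Hg Hdep3.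
  destruct (lin_dep3_tangent n (tau x) (tau' x) lam (Hsphere x ltac:(lra))
              (tau_perp_deriv x Hx Hd) Hlam Hg Hdep3) as [c Hc].
  set (g := dot n lam (tau x)) in *.
  assert (HD := derivable_pt_lim_minus (fun _ => 1) (fun s => dot n lam (tau s) * dot n lam (tau s))
    x _ _ (derivable_pt_lim_const 1 x) (derivable_pt_lim_mult _ _ x _ _
      (derivable_pt_lim_dot_const n lam tau _ x Hd) (derivable_pt_lim_dot_const n lam tau _ x Hd))).
  assert (HN := derivable_pt_lim_mult _ _ x _ _
      (derivable_pt_lim_dot_const n z tau _ x Hd) (derivable_pt_lim_dot_const n z tau _ x Hd)).
  assert (Hne : 1 - g * g <> 0) by lra.
  assert (HQ := derivable_pt_lim_div _ _ x _ _ HN HD Hne).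
  unfold Qz. unfold div_fct, minus_fct, mult_fct in HQ. simpl in HQ.
  rewrite Hc, (Hc lam), Hz, Hlam in HQ. fold g in HQ.
  set (Z := dot n z (tau x)) in *.
  replace 0 with (((c * (0 - g * Z) * Z + Z * (c * (0 - g * Z))) * (1 - g * g)
                   - (0 - (c * (1 - g * g) * g + g * (c * (1 - g * g)))) * (Z * Z))
                  / Rsqr (1 - g * g))
    by (unfold Rsqr; field; lra).
  exact HQ.
Qed.

Lemma Qz_const_between z c d : 0 <= c -> c < d -> d <= L -> dot n z lam = 0 ->
  (forall t, c <= t <= d -> dot n lam (tau t) * dot n lam (tau t) < 1) ->
  (forall t, c < t < d -> 0 < k * vnorm n (u t)) ->
  Qz n lam z tau c = Qz n lam z tau d.
Proof.
  intros Hc Hcd Hd Hz Hg Hu.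
  assert (Hlip := Qz_lipon z c d Hc ltac:(lra) Hd Hg).
  assert (Hmid : forall h, 0 < h < (d - c) / 2 -> Qz n lam z tau (d - h) = Qz n lam z tau (c + h)).
  { intros h Hh. apply lipon_ae_deriv0_const; [lra | eapply lipon_sub; [| | exact Hlip]; lra |].
    apply (ae_on_weaken 0 L _ _ _ _ Hreg); try lra.
    intros x Hx [Hdx _]. apply Qz_deriv0; auto; try lra; [apply Hg; lra|].
    apply Hdep. split; [lra | apply Hu; lra]. }
  destruct Hlip as [K [HK HQ]].
  apply Rminus_diag_uniq, (Rabs_le_lin_eq0 _ (2 * K) ((d - c) / 2)); [lra | lra |].
  intros h Hh.
  replace (Qz n lam z tau c - Qz n lam z tau d) with
    ((Qz n lam z tau c - Qz n lam z tau (c + h)) + (Qz n lam z tau (d - h) - Qz n lam z tau d))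
    by (rewrite Hmid by lra; ring).
  eapply Rle_trans; [apply Rabs_triang|].
  assert (Hleft := HQ c (c + h) ltac:(lra) ltac:(lra)).
  assert (Hright := HQ (d - h) d ltac:(lra) ltac:(lra)).
  replace (c - (c + h)) with (- h) in Hleft by ring. replace (d - h - d) with (- h) in Hright by ring.
  rewrite Rabs_Ropp, (Rabs_right h) in Hleft, Hright by lra. lra.
Qed.

Lemma Qz_eq_of_segment z y y' : 0 <= y <= L -> 0 <= y' <= L -> dot n z lam = 0 ->
  (forall t, Rmin y y' <= t <= Rmax y y' -> dot n lam (tau t) * dot n lam (tau t) < 1) ->
  (forall t, Rmin y y' < t < Rmax y y' -> 0 < k * vnorm n (u t)) ->
  Qz n lam z tau y = Qz n lam z tau y'.
Proof.
  intros Hy Hy' Hz Hg Hu. destruct (Rtotal_order y y') as [H | [<- | H]]; auto.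
  - rewrite Rmin_left, Rmax_right in * by lra. apply Qz_const_between; auto; lra.
  - rewrite Rmin_right, Rmax_left in * by lra. symmetry. apply Qz_const_between; auto; lra.
Qed.

Lemma u_pos_near s : 0 <= s <= L -> 0 < k * vnorm n (u s) ->
  exists d, 0 < d /\ forall t, 0 <= t <= L -> Rabs (t - s) < d -> 0 < k * vnorm n (u t).
Proof.
  intros Hs Hus.
  assert (Hlip : lipon 0 L (fun t => dot n (u t) (u t))) by (apply lipon_dot; auto; lra).
  destruct (cont_within_pos_near 0 L _ s (lipon_cont_within _ _ _ _ Hlip Hs)) as [d [Hd H]].
  { rewrite <- vnorm_sq. assert (0 < vnorm n (u s)) by (apply (Rmult_lt_reg_l k); lra). nra. }
  exists d; split; auto. intros t Ht Hts. apply Rmult_lt_0_compat; auto. apply sqrt_lt_R0, H; auto.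
Qed.

Lemma u_dot_deriv p x : 0 < x < L -> regular_point x ->
  derivable_pt_lim (fun t => dot n p (u t)) x
    (- (k * vnorm n (u x)) * dot n p (tau x)
     + beta x * (dot n p lam - dot n lam (tau x) * dot n p (tau x))).
Proof.
  intros Hx [_ [Hdu [Hode Hpar]]].
  rewrite <- (parallel_dot n (u x) (tau' x) k Hpar), <- (ode_dot n (u x) (u' x) (tau x) (tau' x))
    by auto.
  now apply derivable_pt_lim_dot_const.
Qed.

Lemma u_dot_deriv_lower_bound p s : 0 <= s <= L -> vzero n (u s) ->
  dot n p (tau s) = 0 -> 0 < dot n p lam ->
  exists d m, 0 < d /\ 0 < m /\ forall x, 0 < x < L -> Rabs (x - s) < d -> regular_point x ->
    exists l, derivable_pt_lim (fun t => dot n p (u t)) x l /\ m <= l.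
Proof.
  intros Hs Hus Hpt Hpl.
  set (A := fun t => dot n p lam - dot n lam (tau t) * dot n p (tau t)).
  assert (HA : A s = dot n p lam) by (unfold A; rewrite Hpt; ring).
  set (m := b0 * dot n p lam / 4).
  assert (Hm : 0 < m) by (unfold m; nra).
  set (eta := m / (k * (l1norm n p + 1))).
  pose proof (l1norm_nonneg n p).
  assert (Heta0 : 0 < eta) by (apply Rdiv_lt_0_compat; nra).
  assert (Heta : k * eta * l1norm n p <= m).
  { assert (k * eta * (l1norm n p + 1) = m) by (unfold eta; field; lra). nra. }
  assert (HlipA : lipon 0 L A).
  { apply (lipon_minus 0 L (fun _ => dot n p lam)); [apply lipon_const|].
    apply (lipon_mult 0 L (fun t => dot n lam (tau t)) (fun t => dot n p (tau t)));
      [lra | apply tau_dot_lipon; lra | apply tau_dot_lipon; lra]. }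
  assert (Hlipu : lipon 0 L (fun t => dot n (u t) (u t))) by (apply lipon_dot; auto; lra).
  destruct (lipon_cont_within _ _ _ _ HlipA Hs (dot n p lam / 2)) as [d1 [Hd1 HA1]]; [lra|].
  destruct (lipon_cont_within _ _ _ _ Hlipu Hs (eta * eta)) as [d2 [Hd2 Hu2]]; [nra|].
  exists (Rmin d1 d2), m. split; [apply Rmin_pos; auto | split; auto].
  intros x Hx Hxs Hrx. eexists. split; [exact (u_dot_deriv p x Hx Hrx)|].
  assert (Rabs (x - s) < d1 /\ Rabs (x - s) < d2) by (split; eapply Rlt_le_trans;
    [eauto | apply Rmin_l | eauto | apply Rmin_r]).
  assert (HAx := HA1 x ltac:(lra) ltac:(lra)). rewrite HA in HAx. fold (A x). apply Rabs_def2 in HAx.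
  assert (Hux := Hu2 x ltac:(lra) ltac:(lra)).
  rewrite (dot_vzero_r n (u s) (u s) Hus), Rminus_0_r, Rabs_right in Hux by apply Rle_ge, dot_nonneg.
  assert (vnorm n (u x) < eta).
  { rewrite <- (sqrt_Rsqr eta) by lra.
    apply sqrt_lt_1; [apply dot_nonneg | apply Rle_0_sqr | unfold Rsqr; lra]. }
  assert (Hpx := dot_unit_le_l1norm n p (tau x) (Hsphere x ltac:(lra))).
  pose proof (sqrt_pos (dot n (u x) (u x))). fold (vnorm n (u x)) in *.
  assert (b0 * (dot n p lam / 2) <= beta x * A x)
    by (apply Rmult_le_compat; try lra; apply Hbeta; lra).
  assert (k * vnorm n (u x) * Rabs (dot n p (tau x)) <= k * eta * l1norm n p).
  { rewrite Rmult_assoc, Rmult_assoc. apply Rmult_le_compat_l; [lra|].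
    apply Rmult_le_compat; try lra. apply Rabs_pos. }
  assert (k * vnorm n (u x) * dot n p (tau x) <= k * vnorm n (u x) * Rabs (dot n p (tau x)))
    by (apply Rmult_le_compat_l; [nra | apply Rle_abs]).
  unfold m in *. lra.
Qed.

(* Where [u] vanishes away from the poles, the ODE pushes [u] in the direction of the
   tangential part [p] of [lam], so that [p . u] is strictly monotone near [s]. *)
Lemma u_pos_punctured_of_zero s : 0 <= s <= L -> vzero n (u s) ->
  dot n lam (tau s) * dot n lam (tau s) < 1 ->
  exists d, 0 < d /\ forall t, 0 <= t <= L -> 0 < Rabs (t - s) < d -> 0 < k * vnorm n (u t).
Proof.
  intros Hs Hus Hgs.
  set (p := fun i => 1 * lam i + (- dot n lam (tau s)) * tau s i).
  assert (Hpt : dot n p (tau s) = 0).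
  { unfold p. rewrite dot_sym, dot_lin_r, Hsphere, dot_sym by lra. ring. }
  assert (Hpl : 0 < dot n p lam) by (unfold p; rewrite dot_sym, dot_lin_r, Hlam; lra).
  destruct (u_dot_deriv_lower_bound p s Hs Hus Hpt Hpl) as [d [m [Hd [Hm Hderiv]]]].
  exists d; split; auto. intros t Ht Hts.
  assert (Hpu : dot n p (u t) <> dot n p (u s)).
  { apply (lipon_ae_deriv_pos_punctured (fun r => dot n p (u r)) 0 L s d m); auto.
    - apply lipon_dot; [lra | intros; apply lipon_const | auto].
    - apply (ae_on_weaken 0 L 0 L _ _ Hreg); try lra. intros x Hx Hrx Hxs. now apply Hderiv. }
  apply Rmult_lt_0_compat; auto. apply vnorm_pos. intros Hut. apply Hpu.
  rewrite !dot_vzero_r; auto.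
Qed.

Lemma u_pos_punctured s : 0 <= s <= L -> dot n lam (tau s) * dot n lam (tau s) < 1 ->
  exists d, 0 < d /\ forall t, 0 <= t <= L -> 0 < Rabs (t - s) < d -> 0 < k * vnorm n (u t).
Proof.
  intros Hs Hgs. destruct (classic (vzero n (u s))) as [Hus | Hus].
  - now apply u_pos_punctured_of_zero.
  - destruct (u_pos_near s Hs) as [d [Hd H]].
    + apply Rmult_lt_0_compat; auto. now apply vnorm_pos.
    + exists d; split; auto. intros t Ht Hts. apply H; auto; lra.
Qed.

Lemma zeros_propagate_regular s : 0 <= s <= L -> dot n lam (tau s) * dot n lam (tau s) < 1 ->
  exists d, 0 < d /\ forall z, dot n z lam = 0 -> forall y y', 0 <= y <= L -> 0 <= y' <= L ->
    Rabs (y - s) < d -> Rabs (y' - s) < d -> dot n z (tau y) = 0 -> dot n z (tau y') = 0.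
Proof.
  intros Hs Hgs.
  destruct (u_pos_punctured s Hs Hgs) as [d1 [Hd1 Hu]].
  destruct (gap_pos_near s Hs Hgs) as [d2 [Hd2 Hg]].
  set (d := Rmin d1 d2). assert (d <= d1 /\ d <= d2) by (split; [apply Rmin_l | apply Rmin_r]).
  exists d. split; [apply Rmin_pos; auto|]. intros z Hz y y' Hy Hy' Hys Hy's Zy.
  assert (Hnear : forall t, 0 <= t <= L -> Rabs (t - s) < d -> Qz n lam z tau s = Qz n lam z tau t).
  { intros t Ht Hts. apply Qz_eq_of_segment; auto.
    - intros r Hr. assert (Rabs (r - s) < d) by (apply (between_dist s t); auto).
      apply Hg; [unfold Rmin, Rmax in Hr; destruct Rle_dec|]; lra.
    - intros r Hr. assert (Rabs (r - s) < d) by (apply (between_dist s t); [lra | auto]).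
      apply Hu; [unfold Rmin, Rmax in Hr; destruct Rle_dec; lra|].
      split; [apply Rabs_pos_lt; unfold Rmin, Rmax in Hr; destruct Rle_dec; lra | lra]. }
  apply (Qz_eq0_iff n lam z tau y'); [apply Hg; auto; lra|].
  rewrite <- Hnear, (Hnear y) by auto. apply Qz_eq0_iff; auto. apply Hg; auto; lra.
Qed.

Lemma pole_velocity s : 0 <= s <= L -> 0 < k * vnorm n (u s) ->
  dot n lam (tau s) * dot n lam (tau s) = 1 ->
  dot n lam (tau' s) = 0 /\ dot n (tau' s) (tau' s) = k * k.
Proof.
  intros Hs Hus Hgs.
  assert (Hc' := Hcont s (conj Hs Hus)).
  assert (Hc : forall i, (i < n)%nat -> cont_within 0 L (fun t => tau t i) s)
    by (intros; apply lipon_cont_within; auto).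
  split.
  - assert (Hperp : dot n (tau s) (tau' s) = 0).
    { apply (cont_within_ae_value 0 L (fun t => dot n (tau t) (tau' t)) s 0 1); try lra.
      - now apply cont_within_dot.
      - apply (ae_on_weaken 0 L 0 L _ _ Hreg); try lra.
        intros x Hx [Hd _] _. now apply tau_perp_deriv. }
    rewrite (dot_ext n (tau s) (tau' s) (fun i => dot n lam (tau s) * lam i) (tau' s)),
      dot_scal_l in Hperp by (auto; apply unit_dot_sq_eq1; auto).
    apply Rmult_integral in Hperp. destruct Hperp; [nra | auto].
  - destruct (u_pos_near s Hs Hus) as [d [Hd Hu]].
    apply (cont_within_ae_value 0 L (fun t => dot n (tau' t) (tau' t)) s (k * k) d); try lra; auto.
    + now apply cont_within_dot.
    + apply (ae_on_weaken 0 L 0 L _ _ Hreg); try lra. intros x Hx [_ [_ [_ Hpar]]] Hxs.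
      apply (parallel_norm n (u x) (tau' x) k Hpar).
      specialize (Hu x ltac:(lra) Hxs). nra.
Qed.

Lemma tau_dot_expansion z s : 0 <= s <= L -> vcont_within n 0 L tau' s ->
  forall e, 0 < e -> exists d, 0 < d /\ forall t, 0 <= t <= L -> Rabs (t - s) < d ->
    Rabs (dot n z (tau t) - dot n z (tau s) - dot n z (tau' s) * (t - s)) <= e * Rabs (t - s).
Proof.
  intros Hs Hc.
  apply (lipon_ae_deriv_expansion 0 L (fun t => dot n z (tau t)) (fun t => dot n z (tau' t))); auto.
  - apply tau_dot_lipon; lra.
  - apply (ae_on_weaken 0 L 0 L _ _ Hreg); try lra.
    intros x _ [Hd _]. now apply derivable_pt_lim_dot_const.
  - apply (cont_within_dot 0 L n (fun _ => z) tau'); auto. intros; apply cont_within_const.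
Qed.

Lemma tau_dot_deriv0_of_zeros z s : 0 <= s <= L -> vcont_within n 0 L tau' s ->
  dot n z (tau s) = 0 ->
  (forall d, 0 < d -> exists t, 0 <= t <= L /\ 0 < Rabs (t - s) < d /\ dot n z (tau t) = 0) ->
  dot n z (tau' s) = 0.
Proof.
  intros Hs Hc Hzs Hzeros. apply Rabs_le_eps_eq0. intros e He.
  destruct (tau_dot_expansion z s Hs Hc e He) as [d [Hd Hexp]].
  destruct (Hzeros d Hd) as [t [Ht [Hts Hzt]]].
  specialize (Hexp t Ht ltac:(lra)).
  replace (dot n z (tau t) - dot n z (tau s) - dot n z (tau' s) * (t - s))
    with (- (dot n z (tau' s) * (t - s))) in Hexp by (rewrite Hzt, Hzs; ring).
  rewrite Rabs_Ropp, Rabs_mult in Hexp. apply Rmult_le_reg_r with (Rabs (t - s)); lra.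
Qed.

(* Near a pole [tau] leaves [lam] with speed [k] in a direction [w] orthogonal to [lam]; by
   Cauchy-Schwarz, [(w . tau)^2 <= k^2 |tau - (lam . tau) lam|^2 = k^2 (1 - (lam . tau)^2)]. *)
Lemma pole_gap_lower_bound s : 0 <= s <= L -> 0 < k * vnorm n (u s) ->
  dot n lam (tau s) * dot n lam (tau s) = 1 ->
  exists d, 0 < d /\ forall t, 0 <= t <= L -> Rabs (t - s) < d ->
    k * k * ((t - s) * (t - s)) / 4 <= 1 - dot n lam (tau t) * dot n lam (tau t).
Proof.
  intros Hs Hus Hgs.
  destruct (pole_velocity s Hs Hus Hgs) as [Hwl Hww]. set (w := tau' s) in *.
  destruct (tau_dot_expansion w s Hs (Hcont s (conj Hs Hus)) (k * k / 2)) as [d [Hd Hexp]];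
    [nra|].
  exists d; split; auto. intros t Ht Hts. specialize (Hexp t Ht Hts).
  assert (Hws : dot n w (tau s) = 0).
  { rewrite (dot_ext n w (tau s) w (fun i => dot n lam (tau s) * lam i)), dot_scal_r,
      (dot_sym n w lam), Hwl by (auto; apply unit_dot_sq_eq1; auto).
    ring. }
  fold w in Hexp. rewrite Hws, Hww in Hexp.
  assert (Hcs := dot_cauchy_schwarz n w (fun i => 1 * tau t i + (- dot n lam (tau t)) * lam i)).
  rewrite unit_gap, dot_lin_r, (dot_sym n w lam), Hwl, Hww in Hcs by auto.
  set (X := dot n w (tau t)) in *.
  apply Rabs_le_bounds in Hexp.
  assert (Hh : k * k * (t - s) / 2 * (k * k * (t - s) / 2) <= X * X)
    by (destruct (Rle_or_lt 0 (t - s)); [rewrite Rabs_right in Hexp | rewrite Rabs_left in Hexp];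
        nra).
  apply Rmult_le_reg_l with (k * k); nra.
Qed.

Lemma pole_Qz_small z s : 0 <= s <= L -> 0 < k * vnorm n (u s) ->
  dot n lam (tau s) * dot n lam (tau s) = 1 ->
  dot n z (tau s) = 0 -> dot n z (tau' s) = 0 ->
  forall e, 0 < e -> exists d, 0 < d /\ forall t, 0 <= t <= L -> 0 < Rabs (t - s) < d ->
    Qz n lam z tau t <= e.
Proof.
  intros Hs Hus Hgs Hzs Hzw e He.
  destruct (pole_gap_lower_bound s Hs Hus Hgs) as [d1 [Hd1 Hgap]].
  set (e' := Rmin 1 (e * (k * k) / 4)).
  assert (0 < e * (k * k) / 4) by (apply Rdiv_lt_0_compat; [apply Rmult_lt_0_compat; nra | lra]).
  assert (0 < e' /\ e' <= 1 /\ e' <= e * (k * k) / 4)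
    by (unfold e'; repeat split; [apply Rmin_pos; lra | apply Rmin_l | apply Rmin_r]).
  destruct (tau_dot_expansion z s Hs (Hcont s (conj Hs Hus)) e') as [d2 [Hd2 Hexp]]; [lra|].
  exists (Rmin d1 d2). split; [apply Rmin_pos; auto|]. intros t Ht Hts.
  pose proof (Rmin_l d1 d2). pose proof (Rmin_r d1 d2).
  specialize (Hgap t Ht ltac:(lra)). specialize (Hexp t Ht ltac:(lra)).
  rewrite Hzs, Hzw, Rmult_0_l, !Rminus_0_r in Hexp.
  assert (Hh : 0 < (t - s) * (t - s)).
  { apply Rsqr_pos_lt. intros Hts0. rewrite Hts0, Rabs_R0 in Hts. lra. }
  assert (HX : Rsqr (dot n z (tau t)) <= Rsqr (e' * Rabs (t - s))).
  { apply Rsqr_le_abs_1. rewrite (Rabs_right (e' * Rabs (t - s))); [lra|].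
    apply Rle_ge, Rmult_le_pos; [lra | apply Rabs_pos]. }
  rewrite Rsqr_mult, <- Rsqr_abs in HX. unfold Rsqr in HX.
  assert (0 < k * k * ((t - s) * (t - s))) by (apply Rmult_lt_0_compat; nra).
  assert (e' * e' * ((t - s) * (t - s)) <= e * (k * k * ((t - s) * (t - s)) / 4)).
  { replace (e * (k * k * ((t - s) * (t - s)) / 4)) with (e * (k * k) / 4 * ((t - s) * (t - s)))
      by field.
    apply Rmult_le_compat_r; nra. }
  assert (e * (k * k * ((t - s) * (t - s)) / 4) <= e * (1 - dot n lam (tau t) * dot n lam (tau t)))
    by (apply Rmult_le_compat_l; lra).
  unfold Qz. apply Rmult_le_reg_r with (1 - dot n lam (tau t) * dot n lam (tau t)); [lra|].
  unfold Rdiv. rewrite Rmult_assoc, Rinv_l, Rmult_1_r by lra. lra.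
Qed.

Lemma pole_punctured_nbhd s : 0 <= s <= L -> 0 < k * vnorm n (u s) ->
  dot n lam (tau s) * dot n lam (tau s) = 1 ->
  exists d, 0 < d /\ forall t, 0 <= t <= L -> 0 < Rabs (t - s) < d ->
    dot n lam (tau t) * dot n lam (tau t) < 1 /\ 0 < k * vnorm n (u t).
Proof.
  intros Hs Hus Hgs.
  destruct (pole_gap_lower_bound s Hs Hus Hgs) as [d1 [Hd1 Hgap]].
  destruct (u_pos_near s Hs Hus) as [d2 [Hd2 Hu]].
  exists (Rmin d1 d2). split; [apply Rmin_pos; auto|]. intros t Ht Hts.
  pose proof (Rmin_l d1 d2). pose proof (Rmin_r d1 d2). split; [|apply Hu; auto; lra].
  assert (0 < (t - s) * (t - s))
    by (apply Rsqr_pos_lt; intros Hts0; rewrite Hts0, Rabs_R0 in Hts; lra).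
  assert (0 < k * k * ((t - s) * (t - s))) by (apply Rmult_lt_0_compat; nra).
  specialize (Hgap t Ht ltac:(lra)). lra.
Qed.

Lemma zeros_propagate_pole s : 0 <= s <= L -> 0 < k * vnorm n (u s) ->
  dot n lam (tau s) * dot n lam (tau s) = 1 ->
  exists d, 0 < d /\ forall z, dot n z lam = 0 -> forall y y', 0 <= y <= L -> 0 <= y' <= L ->
    Rabs (y - s) < d -> Rabs (y' - s) < d -> y <> s -> dot n z (tau y) = 0 -> dot n z (tau y') = 0.
Proof.
  intros Hs Hus Hgs.
  assert (Hpole := unit_dot_sq_eq1 n (tau s) lam (Hsphere s Hs) Hlam Hgs).
  assert (Hzs : forall z, dot n z lam = 0 -> dot n z (tau s) = 0)
    by (intros z Hz; rewrite (dot_ext n z (tau s) z _ (fun _ _ => eq_refl) Hpole), dot_scal_r, Hz;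
        ring).
  destruct (pole_punctured_nbhd s Hs Hus Hgs) as [d [Hd Hpunct]].
  assert (Hside : forall z, dot n z lam = 0 -> forall t t', 0 <= t <= L -> 0 <= t' <= L ->
    0 < Rabs (t - s) < d -> 0 < Rabs (t' - s) < d -> 0 < (t - s) * (t' - s) ->
    Qz n lam z tau t = Qz n lam z tau t').
  { intros z Hz t t' Ht Ht' Hts Ht's Hsame.
    apply Qz_eq_of_segment; auto; intros r Hr;
      (apply Hpunct; [unfold Rmin, Rmax in Hr; destruct Rle_dec; lra |
                      apply (same_side_between_dist s t t'); auto; lra]). }
  exists d. split; auto. intros z Hz y y' Hy Hy' Hys Hy's Hne Zy.
  destruct (Req_dec y' s) as [-> | Hne']; [now apply Hzs|].
  assert (Hy0 : 0 < Rabs (y - s)) by (apply Rabs_pos_lt; lra).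
  assert (Hy'0 : 0 < Rabs (y' - s)) by (apply Rabs_pos_lt; lra).
  assert (Htoward : forall y0 D, 0 <= y0 <= L -> 0 < Rabs (y0 - s) < d -> 0 < D ->
    exists t, 0 <= t <= L /\ 0 < Rabs (t - s) < Rmin d D /\ Qz n lam z tau t = Qz n lam z tau y0).
  { intros y0 D Hy0L Hy0s HD.
    destruct (exists_point_toward s y0 (Rmin d D)) as [t [Hbt [Hts [Htd Hsame]]]];
      [intros ->; rewrite Rminus_diag, Rabs_R0 in Hy0s; lra | apply Rmin_pos; lra|].
    assert (0 <= t <= L) by (unfold Rmin, Rmax in Hbt; destruct Rle_dec; lra).
    pose proof (Rmin_l d D). exists t. repeat split; try lra. apply Hside; auto; lra. }
  assert (Hzw : dot n z (tau' s) = 0).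
  { apply tau_dot_deriv0_of_zeros; auto. intros D HD.
    destruct (Htoward y D Hy ltac:(lra) HD) as [t [Ht [Hts HQ]]].
    pose proof (Rmin_l d D). pose proof (Rmin_r d D).
    exists t. split; [lra | split; [lra|]].
    apply (Qz_eq0_iff n lam z tau t); [apply Hpunct; auto; lra|].
    rewrite HQ. apply Qz_eq0_iff; auto. apply Hpunct; auto. }
  apply (Qz_eq0_iff n lam z tau y'); [apply Hpunct; auto|].
  apply Rle_antisym; [|apply Qz_nonneg, Hpunct; auto].
  apply Rle_plus_epsilon. intros e He. rewrite Rplus_0_l.
  destruct (pole_Qz_small z s Hs Hus Hgs (Hzs z Hz) Hzw e He) as [D [HD Hsmall]].
  destruct (Htoward y' D Hy' ltac:(lra) HD) as [t [Ht [Hts HQ]]].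
  rewrite <- HQ. apply Hsmall; auto. pose proof (Rmin_r d D). lra.
Qed.

Lemma zeros_propagate x :
  (0 <= x <= L /\ ~ veq n (tau x) lam /\ ~ veq n (tau x) (vopp lam)) \/
  (0 <= x <= L /\ 0 < k * vnorm n (u x)) ->
  exists d, 0 < d /\ forall z, dot n z lam = 0 -> forall y y', 0 <= y <= L -> 0 <= y' <= L ->
    Rabs (y - x) < d -> Rabs (y' - x) < d -> y <> x -> dot n z (tau y) = 0 -> dot n z (tau y') = 0.
Proof.
  intros Hx. assert (Hx01 : 0 <= x <= L) by tauto.
  destruct (Rlt_or_le (dot n lam (tau x) * dot n lam (tau x)) 1) as [Hg | Hg].
  - destruct (zeros_propagate_regular x Hx01 Hg) as [d [Hd H]].
    exists d; split; auto. intros z Hz y y' Hy Hy' Hyx Hy'x _. now apply H.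
  - assert (Hg1 : dot n lam (tau x) * dot n lam (tau x) = 1)
      by (pose proof (unit_dot_sq_le1 n (tau x) lam (Hsphere x Hx01) Hlam); lra).
    apply zeros_propagate_pole; auto.
    destruct Hx as [[_ [Hnl Hnml]] | [_ H]]; auto. exfalso.
    assert (Hpole := unit_dot_sq_eq1 n (tau x) lam (Hsphere x Hx01) Hlam Hg1).
    destruct (Rle_or_lt 0 (dot n lam (tau x))); [apply Hnl | apply Hnml];
      intros i Hi; rewrite (Hpole i Hi); unfold vopp;
      [replace (dot n lam (tau x)) with 1 by nra | replace (dot n lam (tau x)) with (-1) by nra];
      ring.
Qed.

Lemma component_in_great_circle (I : R -> Prop) : (2 <= n)%nat -> is_interval I ->
  (forall x, I x -> (0 <= x <= L /\ ~ veq n (tau x) lam /\ ~ veq n (tau x) (vopp lam)) \/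
                    (0 <= x <= L /\ 0 < k * vnorm n (u x))) ->
  in_great_circle_through n lam tau I.
Proof.
  intros Hn HI HIS.
  assert (HI01 : forall x, I x -> 0 <= x <= L)
    by (intros x Hx; destruct (HIS x Hx) as [[? _] | [? _]]; auto).
  destruct (classic (exists ts, I ts /\ dot n lam (tau ts) * dot n lam (tau ts) < 1))
    as [[ts [Hts Hgts]] | Hpoles].
  - set (v := fun i => 1 * tau ts i + (- dot n lam (tau ts)) * lam i).
    assert (Hvv : dot n v v = 1 - dot n lam (tau ts) * dot n lam (tau ts))
      by (apply unit_gap; auto).
    assert (Hlv : dot n lam v = 0)
      by (unfold v; rewrite dot_lin_r, Hlam; ring).
    destruct (normalize n v lam ltac:(lra) Hlv) as [mu [Hmu [Hlmu Hvmu]]].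
    exists mu. repeat split; auto. intros t Ht. apply veq_span2_of_orthogonal; auto.
    intros z Hzl Hzm.
    assert (Hzts : dot n z (tau ts) = 0).
    { rewrite (dot_ext n z (tau ts) z
                 (fun i => sqrt (dot n v v) * mu i + dot n lam (tau ts) * lam i)), dot_lin_r, Hzl, Hzm
        by (auto; intros i Hi; rewrite <- (Hvmu i Hi); unfold v; ring).
      ring. }
    destruct (zeros_propagate_regular ts (HI01 ts Hts) Hgts) as [d0 [Hd0 Hstart]].
    apply (interval_propagation I (fun y => dot n z (tau y) = 0) ts HI Hts); auto.
    + exists d0. split; auto. intros y Hy Hyts.
      apply (Hstart z Hzl ts y); auto. rewrite Rminus_diag, Rabs_R0. lra.
    + intros x Hx. destruct (zeros_propagate x (HIS x Hx)) as [d [Hd H]].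
      exists d. split; auto. intros y y' Hy Hy'. apply H; auto.
  - destruct (exists_unit_orthogonal n lam Hn Hlam) as [mu [Hmu Hlmu]].
    exists mu. repeat split; auto. intros t Ht. apply veq_span2_of_orthogonal; auto.
    intros z Hzl _.
    assert (Hg1 : dot n lam (tau t) * dot n lam (tau t) = 1).
    { pose proof (unit_dot_sq_le1 n (tau t) lam (Hsphere t (HI01 t Ht)) Hlam).
      destruct (Rlt_or_le (dot n lam (tau t) * dot n lam (tau t)) 1); [|lra].
      exfalso. eauto. }
    rewrite (dot_ext n z (tau t) z _ (fun _ _ => eq_refl)
               (unit_dot_sq_eq1 n (tau t) lam (Hsphere t (HI01 t Ht)) Hlam Hg1)), dot_scal_r, Hzl.
    ring.
Qed.

End Component.

Theorem mainTheorem16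
  (n : nat) (L : R) (beta : R -> R) (tau tau' : R -> vec) (k : R)
  (lam : vec) (u u' : R -> vec)
  (Hn : (2 <= n)%nat)
  (HL : 0 < L)
  (Hbeta_pos : forall t, 0 <= t <= L -> 0 < beta t)
  (Hbeta_bv : bounded_variation 0 L beta)
  (Hbeta_inv : exists C, forall t, 0 <= t <= L -> / beta t <= C)
  (Htau : W1inf n 0 L tau tau')
  (Htau_sphere : forall t, 0 <= t <= L -> dot n (tau t) (tau t) = 1)
  (Hk : is_ess_sup 0 L (fun t => vnorm n (tau' t)) k)
  (Hk_pos : 0 < k)
  (Hlam : dot n lam lam = 1)
  (Hu : W1inf n 0 L u u')
  (Hu_nz : exists t, 0 <= t <= L /\ ~ vzero n (u t))
  (Hode : ae_on 0 L (fun t =>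
     veq n (fun i => u' t i + dot n (u t) (tau' t) * tau t i)
           (fun i => beta t * (lam i - dot n lam (tau t) * tau t i))))
  (Hpar : ae_on 0 L (fun t =>
     veq n (fun i => vnorm n (u t) * tau' t i) (fun i => k * u t i)))
  (Hcont : forall t, (0 <= t <= L /\ 0 < k * vnorm n (u t)) ->
     vcont_within n 0 L tau' t)
  (Hdep : forall t, (0 <= t <= L /\ 0 < k * vnorm n (u t)) ->
     lin_dep3 n (tau t) (tau' t) lam) :
  forall I : R -> Prop,
    conn_component
      (fun t => (0 <= t <= L /\ ~ veq n (tau t) lam /\ ~ veq n (tau t) (vopp lam))
                \/ (0 <= t <= L /\ 0 < k * vnorm n (u t)))
      I ->
    in_great_circle_through n lam tau I.
Proof.
  intros I [_ [HIS [HI _]]].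
  destruct Hbeta_inv as [C HC].
  destruct (lower_bound_of_inv_bound beta L C ltac:(lra) Hbeta_pos HC) as [HC0 Hbeta].
  apply (component_in_great_circle n L k (/ C) beta tau tau' u u' lam); auto.
  - apply W1inf_lipon with tau'. exact Htau.
  - apply W1inf_lipon with u'. exact Hu.
  - unfold regular_point. repeat apply ae_on_and; auto; [apply Htau | apply Hu].
Qed.
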